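(* The set $\Sigma_0=\{X_0,\ CX_{0,1},\ CCX_{1,2},\ K_{1,2}\}$ of $8\times 8$ matrices is a minimal generating set for $W(E_8)$: it generates $W(E_8)$, and no proper subset of $\Sigma_0$ generates $W(E_8)$.
   Context: Qubits are labelled $0,1,2$; the basis vector $|x_0x_1x_2\rangle$ is identified with $e_{4x_0+2x_1+x_2}\in\mathbb{R}^8$. $X=\begin{bmatrix}0&1\\1&0\end{bmatrix}$, $H=\frac1{\sqrt2}\begin{bmatrix}1&1\\1&-1\end{bmatrix}$, and $M_j$ denotes $M$ acting on qubit $j$ (e.g. $X_0=X\otimes I\otimes I$). $CX_{0,1}$ sends $|x_0x_1x_2\rangle$ to $|x_0,x_1\oplus x_0,x_2\rangle$; $CCX_{1,2}$ sends $|x_0x_1x_2\rangle$ to $|x_0\oplus x_1x_2,x_1,x_2\rangle$; $K_{1,2}=I\otimes H\otimes H$. With $\mathbb{D}=\mathbb{Z}[1/2]$ and $\Gamma_8=\{x\in\mathbb{Z}^8\cup(\mathbb{Z}+\tfrac12)^8:\sum_ix_i\equiv0\pmod2\}$ (the $E_8$ lattice), $W(E_8)$ is the group of $8\times8$ orthogonal matrices $M$ with entries in $\mathbb{D}$ satisfying $M\Gamma_8=\Gamma_8$. *)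

(* Matrices over rat (dyadic rationals form a subring of Q). *)
From HB Require Import structures.
From mathcomp Require Import all_boot all_order all_algebra.
Set Implicit Arguments. Unset Strict Implicit. Unset Printing Implicit Defensive.
Import Order.TTheory GRing.Theory Num.Theory.
Local Open Scope ring_scope.

Notation mat8 := 'M[rat]_8.

(* basis vector |x0 x1 x2> is e_(4 x0 + 2 x1 + x2); bits of an index j < 8 *)
Definition bit0 (j : nat) : bool := (4 <= j)%N.
Definition bit1 (j : nat) : bool := odd j./2.
Definition bit2 (j : nat) : bool := odd j.

Definition perm8 (f : nat -> nat) : mat8 :=
  \matrix_(i < 8, j < 8) ((i : nat) == f j)%:R.

(* X_0 : flip qubit 0 *)
Definition fX0 (j : nat) : nat := if bit0 j then (j - 4)%N else (j + 4)%N.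
(* CX_{0,1} : x1 := x1 xor x0 *)
Definition fCX01 (j : nat) : nat :=
  if bit0 j then (if bit1 j then (j - 2)%N else (j + 2)%N) else j.
(* CCX_{1,2} : x0 := x0 xor (x1 x2) *)
Definition fCCX12 (j : nat) : nat :=
  if bit1 j && bit2 j then fX0 j else j.

Definition X0 : mat8 := perm8 fX0.
Definition CX01 : mat8 := perm8 fCX01.
Definition CCX12 : mat8 := perm8 fCCX12.
(* K_{1,2} = I (x) H (x) H, H = 1/sqrt2 [[1,1],[1,-1]] *)
Definition K12 : mat8 :=
  \matrix_(i < 8, j < 8)
    (((bit0 i == bit0 j)%:R / 2%:R) *
     (-1) ^+ ((bit1 i && bit1 j) + (bit2 i && bit2 j))%N).

Definition Sigma0 (M : mat8) : Prop :=
  M = X0 \/ M = CX01 \/ M = CCX12 \/ M = K12.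

Definition is_int (q : rat) : Prop := exists z : int, q = z%:~R.
Definition dyadic (q : rat) : Prop :=
  exists (z : int) (k : nat), q = z%:~R / 2%:R ^+ k.

Definition Gamma8 (x : 'cV[rat]_8) : Prop :=
  ((forall i, is_int (x i 0)) \/ (forall i, is_int (x i 0 - 1 / 2%:R))) /\
  is_int ((\sum_i x i 0) / 2%:R).

Definition WE8 (M : mat8) : Prop :=
  M *m M^T = 1%:M /\ (forall i j, dyadic (M i j)) /\
  (forall y, Gamma8 y <-> exists x, Gamma8 x /\ y = M *m x).

Inductive generated (S : mat8 -> Prop) : mat8 -> Prop :=
| gen_one : generated S 1%:M
| gen_in M : S M -> generated S M
| gen_mul M N : generated S M -> generated S N -> generated S (M *m N)
| gen_inv M : generated S M -> generated S (invmx M).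

Definition generates (S : mat8 -> Prop) : Prop :=
  forall M, generated S M <-> WE8 M.

From mathcomp Require Import all_boot all_order all_algebra.
From mathcomp Require Import ring lra zify.
Set Implicit Arguments. Unset Strict Implicit. Unset Printing Implicit Defensive.
Import Order.TTheory GRing.Theory Num.Theory.
Local Open Scope ring_scope.

(* Each gate is a symmetric involution with dyadic entries that maps Gamma8 into
   itself, so the group generated by Sigma0 lies in W(E8).  Conversely, the simple
   roots r_0, ..., r_7 of E8 form a basis of Q^8.  If M in W(E8) fixes r_0, ...,
   r_(k-1), then M r_k is a root having the same inner products with r_0, ...,
   r_(k-1) as r_k, and a table of words in the gates supplies a word W fixing
   r_0, ..., r_(k-1) with W r_k = M r_k; then W^-1 M fixes r_0, ..., r_k, and after
   eight steps only the identity is left.  For minimality, each gate g has a matrix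
   Q_g commuting with the three other gates but not with g: the group generated by
   the other gates centralises Q_g, so it misses g. *)

Definition vec8 (s : seq rat) : 'cV[rat]_8 := \col_(i < 8) s`_i.
Definition seq8 (v : 'cV[rat]_8) : seq rat := mkseq (fun i => v (inord i) 0) 8.

Lemma seq8K v : vec8 (seq8 v) = v.
Proof. by apply/colP => i; rewrite mxE nth_mkseq // inord_val. Qed.

Lemma size_seq8 v : size (seq8 v) = 8%N.
Proof. exact: size_mkseq. Qed.

Lemma vec8_inj s t : size s = 8%N -> size t = 8%N -> vec8 s = vec8 t -> s = t.
Proof.
move=> size_s size_t st; apply: (@eq_from_nth _ 0); rewrite ?size_s ?size_t // => i lt_i8.
by have := congr1 (fun v : 'cV_8 => v (Ordinal lt_i8) 0) st; rewrite !mxE.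
Qed.

Definition unit8 (j : nat) : seq rat := mkseq (fun k => (k == j)%:R) 8.

Lemma vec8_unit8 (j : 'I_8) : vec8 (unit8 j) = delta_mx j 0.
Proof. by apply/colP => i; rewrite !mxE nth_mkseq // eqxx andbT. Qed.

Lemma eq_mx_unit8 (A B : mat8) :
  (forall j : 'I_8, A *m vec8 (unit8 j) = B *m vec8 (unit8 j)) -> A = B.
Proof.
move=> AB; apply/matrixP => i j.
by have := congr1 (fun v : 'cV_8 => v i 0) (AB j); rewrite vec8_unit8 -!colE !mxE.
Qed.

Definition dot8 (s t : seq rat) : rat :=
  s`_0 * t`_0 + s`_1 * t`_1 + s`_2 * t`_2 + s`_3 * t`_3 +
  s`_4 * t`_4 + s`_5 * t`_5 + s`_6 * t`_6 + s`_7 * t`_7.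

Definition sum8 (s : seq rat) : rat :=
  s`_0 + s`_1 + s`_2 + s`_3 + s`_4 + s`_5 + s`_6 + s`_7.

Definition vdot (u v : 'cV[rat]_8) : rat := (u^T *m v) 0 0.

Lemma vdot_vec8 s t : vdot (vec8 s) (vec8 t) = dot8 s t.
Proof. by rewrite /vdot !mxE !big_ord_recr big_ord0 /= !mxE /= add0r. Qed.

Lemma vdot_orthomx (M : mat8) u v :
  M^T *m M = 1%:M -> vdot (M *m u) (M *m v) = vdot u v.
Proof. by move=> MtM; rewrite /vdot trmx_mul -mulmxA (mulmxA M^T) MtM mul1mx. Qed.

Lemma sqr_le_dot8 (s : seq rat) i : (i < 8)%N -> s`_i ^+ 2 <= dot8 s s.
Proof.
have := sqr_ge0 s`_0; have := sqr_ge0 s`_1; have := sqr_ge0 s`_2;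
have := sqr_ge0 s`_3; have := sqr_ge0 s`_4; have := sqr_ge0 s`_5;
have := sqr_ge0 s`_6; have := sqr_ge0 s`_7.
by rewrite /dot8 -!expr2; case: i => [|[|[|[|[|[|[|[|//]]]]]]]] /=; lra.
Qed.

Definition is_intb (q : rat) : bool := denq q == 1.

Lemma is_intbP q : reflect (is_int q) (is_intb q).
Proof. exact: ratArchimedean.intrP. Qed.

Lemma is_int_numq q : is_int q -> q = (numq q)%:~R.
Proof. by case=> z ->; rewrite numq_int. Qed.

Definition Gamma8_seq (s : seq rat) : Prop :=
  ((forall i, (i < 8)%N -> is_int s`_i) \/
   (forall i, (i < 8)%N -> is_int (s`_i - 1 / 2))) /\ is_int (sum8 s / 2).

Definition Gamma8_seqb (s : seq rat) : bool :=
  (all (fun i => is_intb s`_i) (iota 0 8) ||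
   all (fun i => is_intb (s`_i - 1 / 2)) (iota 0 8)) && is_intb (sum8 s / 2).

Lemma all_iotaP n (P : nat -> Prop) (p : pred nat) :
  (forall i, reflect (P i) (p i)) ->
  reflect (forall i, (i < n)%N -> P i) (all p (iota 0 n)).
Proof.
move=> pP; apply: (iffP allP) => [H i lt_in | H i].
  by apply/pP/H; rewrite mem_iota.
by rewrite mem_iota => /andP [_ lt_in]; apply/pP/H.
Qed.

Lemma all_iota_lt n (p : pred nat) i : all p (iota 0 n) -> (i < n)%N -> p i.
Proof. by move=> /(all_iotaP _ (fun j => idP)); apply. Qed.

Lemma Gamma8_seqbP s : reflect (Gamma8_seq s) (Gamma8_seqb s).
Proof.
have intP := all_iotaP 8 (fun i => is_intbP s`_i).
have halfP := all_iotaP 8 (fun i => is_intbP (s`_i - 1 / 2)).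
apply: (iffP andP) => -[G /is_intbP sum_s]; split=> //.
  by case/orP: G => [/intP|/halfP] G; [left|right].
by apply/orP; case: G => G; [left; apply/intP | right; apply/halfP].
Qed.

Lemma Gamma8_vec8 s : Gamma8 (vec8 s) <-> Gamma8_seq s.
Proof.
rewrite /Gamma8; have -> : \sum_i (vec8 s) i 0 = sum8 s.
  by rewrite !big_ord_recr big_ord0 /= !mxE /= add0r.
split=> -[G ?]; split=> //; case: G => G; [left|right|left|right].
- by move=> i lt_i8; have := G (Ordinal lt_i8); rewrite mxE.
- by move=> i lt_i8; have := G (Ordinal lt_i8); rewrite mxE.
- by move=> i; rewrite mxE; apply: G.
- by move=> i; rewrite mxE; apply: G.
Qed.

Lemma Gamma8_seq_perm s t :
  (forall i, (i < 8)%N -> exists2 j, (j < 8)%N & t`_i = s`_j) ->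
  sum8 t = sum8 s -> Gamma8_seq s -> Gamma8_seq t.
Proof.
move=> ts sum_ts [[G|G] ?]; split; rewrite ?sum_ts //; [left|right] => i /ts [j lt_j8 ->];
  exact: G.
Qed.

Lemma Gamma8_seqP s : Gamma8_seq s <->
  exists (b m : int) (z : nat -> int),
  [/\ b = 0 \/ b = 1, forall i, (i < 8)%N -> s`_i = (z i)%:~R + b%:~R / 2
    & z 0%N + z 1%N + z 2%N + z 3%N + z 4%N + z 5%N + z 6%N + z 7%N = 2 * m].
Proof.
split=> [[G [c sum_s]]|[b [m [z [b01 sz sum_z]]]]].
  have [b b01 G'] : exists2 b : int, b = 0 \/ b = 1 &
      forall i, (i < 8)%N -> is_int (s`_i - b%:~R / 2).
    by case: G => G; [exists 0; [left|] | exists 1; [right|]] => // i;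
      rewrite ?mul0r ?subr0 ?mul1r; apply: G.
  have sz i : (i < 8)%N -> s`_i = (numq (s`_i - b%:~R / 2))%:~R + b%:~R / 2.
    by move=> /G' /is_int_numq <-; rewrite subrK.
  exists b, (c - 2 * b), (fun i => numq (s`_i - b%:~R / 2)); split=> //.
  apply: (@intr_inj rat); move: sum_s (sz 0%N isT) (sz 1%N isT) (sz 2%N isT)
    (sz 3%N isT) (sz 4%N isT) (sz 5%N isT) (sz 6%N isT) (sz 7%N isT).
  by rewrite /sum8 => *; lra.
split; last first.
  exists (m + 2 * b); move: (congr1 (intr : int -> rat) sum_z) (sz 0%N isT) (sz 1%N isT)
    (sz 2%N isT) (sz 3%N isT) (sz 4%N isT) (sz 5%N isT) (sz 6%N isT) (sz 7%N isT).
  by rewrite /sum8 => *; lra.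
by case: b01 => b01; [left|right] => i /sz ->; exists (z i); rewrite b01; lra.
Qed.

Definition actX0 (s : seq rat) : seq rat :=
  [:: s`_4; s`_5; s`_6; s`_7; s`_0; s`_1; s`_2; s`_3].
Definition actCX01 (s : seq rat) : seq rat :=
  [:: s`_0; s`_1; s`_2; s`_3; s`_6; s`_7; s`_4; s`_5].
Definition actCCX12 (s : seq rat) : seq rat :=
  [:: s`_0; s`_1; s`_2; s`_7; s`_4; s`_5; s`_6; s`_3].
Definition actK12 (s : seq rat) : seq rat :=
  [:: (s`_0 + s`_1 + s`_2 + s`_3) / 2; (s`_0 - s`_1 + s`_2 - s`_3) / 2;
      (s`_0 + s`_1 - s`_2 - s`_3) / 2; (s`_0 - s`_1 - s`_2 + s`_3) / 2;
      (s`_4 + s`_5 + s`_6 + s`_7) / 2; (s`_4 - s`_5 + s`_6 - s`_7) / 2;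
      (s`_4 + s`_5 - s`_6 - s`_7) / 2; (s`_4 - s`_5 - s`_6 + s`_7) / 2].

Definition gate (g : nat) : mat8 :=
  match g with 0 => X0 | 1 => CX01 | 2 => CCX12 | _ => K12 end.
Definition gate_act (g : nat) : seq rat -> seq rat :=
  match g with 0 => actX0 | 1 => actCX01 | 2 => actCCX12 | _ => actK12 end.

Lemma gate_vec8 g s : gate g *m vec8 s = vec8 (gate_act g s).
Proof.
by case: g => [|[|[|g]]]; apply/colP => -[[|[|[|[|[|[|[|[|//]]]]]]]] ?];
  rewrite !mxE !big_ord_recr big_ord0 /= !mxE /=; ring.
Qed.

Lemma gate_Sigma0 g : Sigma0 (gate g).
Proof. by case: g => [|[|[|g]]]; rewrite /Sigma0 /=; tauto. Qed.

Lemma Sigma0_gate M : Sigma0 M -> exists2 g, (g < 4)%N & M = gate g.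
Proof. by case=> [->|[->|[->|->]]]; [exists 0%N | exists 1%N | exists 2%N | exists 3%N]. Qed.

Lemma gate_sym g : (gate g)^T = gate g.
Proof.
by apply/matrixP => -[[|[|[|[|[|[|[|[|//]]]]]]]] ?] [[|[|[|[|[|[|[|[|//]]]]]]]] ?];
  case: g => [|[|[|g]]]; rewrite !mxE.
Qed.

Lemma gate_actK g s : vec8 (gate_act g (gate_act g s)) = vec8 s.
Proof.
by case: g => [|[|[|g]]]; apply/colP => -[[|[|[|[|[|[|[|[|//]]]]]]]] ?];
  rewrite !mxE //=; field.
Qed.

Lemma gate_involutive g : gate g *m gate g = 1%:M.
Proof. by apply: eq_mx_unit8 => j; rewrite -mulmxA !gate_vec8 gate_actK mul1mx. Qed.

Lemma Gamma8_seq_actK12 s : Gamma8_seq s -> Gamma8_seq (actK12 s).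
Proof.
move=> /Gamma8_seqP [b [m [z [b01 sz sum_z]]]].
have [q [r [half_z r01]]] : exists q r : int,
    z 0%N + z 1%N + z 2%N + z 3%N = 2 * q + r /\ (r = 0 \/ r = 1).
  by exists ((z 0%N + z 1%N + z 2%N + z 3%N) %/ 2)%Z,
            ((z 0%N + z 1%N + z 2%N + z 3%N) %% 2)%Z; lia.
(* Every coordinate of [actK12 s] is congruent to (z_0 + z_1 + z_2 + z_3) / 2 = q + r / 2
   modulo the integers. *)
apply/Gamma8_seqP; exists r.
exists (b + 2 * m - 2 * r - (z 1%N + z 2%N + z 3%N + z 5%N + z 6%N + z 7%N)).
exists (nth 0 [:: q + b; q - z 1%N - z 3%N; q - z 2%N - z 3%N; q - z 1%N - z 2%N;
                  m - q - r + b; m - q - r - z 5%N - z 7%N; m - q - r - z 6%N - z 7%N;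
                  m - q - r - z 5%N - z 6%N]).
split=> //=; last by ring.
move: (congr1 (intr : int -> rat) sum_z) (congr1 (intr : int -> rat) half_z)
  (sz 0%N isT) (sz 1%N isT) (sz 2%N isT) (sz 3%N isT)
  (sz 4%N isT) (sz 5%N isT) (sz 6%N isT) (sz 7%N isT) => ? ? ? ? ? ? ? ? ? ?.
by case=> [|[|[|[|[|[|[|[|//]]]]]]]] _ /=; lra.
Qed.

Lemma Gamma8_gate g x : Gamma8 x -> Gamma8 (gate g *m x).
Proof.
rewrite -(seq8K x) gate_vec8 !Gamma8_vec8; move: (seq8 x) => s.
case: g => [|[|[|g]]]; last exact: Gamma8_seq_actK12;
  (apply: Gamma8_seq_perm; last by rewrite /sum8 /=; ring);
  by case=> [|[|[|[|[|[|[|[|//]]]]]]]] _ /=; (eexists; last reflexivity).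
Qed.

Lemma dyadic_int (z : int) : dyadic z%:~R.
Proof. by exists z, 0%N; rewrite expr0 divr1. Qed.

Lemma dyadic_nat (n : nat) : dyadic n%:R.
Proof. by rewrite pmulrn; apply: dyadic_int. Qed.

Lemma dyadicD a b : dyadic a -> dyadic b -> dyadic (a + b).
Proof.
move=> [za [ka ->]] [zb [kb ->]]; exists (za * 2 ^+ kb + zb * 2 ^+ ka), (ka + kb)%N.
have two_kX k : (2 : rat) ^+ k != 0 by rewrite expf_neq0.
by rewrite intrD !intrM !rmorphXn /= exprD; field; rewrite !two_kX.
Qed.

Lemma dyadicM a b : dyadic a -> dyadic b -> dyadic (a * b).
Proof.
move=> [za [ka ->]] [zb [kb ->]]; exists (za * zb), (ka + kb)%N.
by rewrite intrM exprD invfM mulrACA.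
Qed.

Lemma dyadic_sum (I : finType) (F : I -> rat) :
  (forall i, dyadic (F i)) -> dyadic (\sum_i F i).
Proof.
by move=> dF; apply: (big_ind dyadic) => //; [apply: (dyadic_int 0) | apply: dyadicD].
Qed.

Lemma gate_dyadic g i j : dyadic (gate g i j).
Proof.
case: g => [|[|[|g]]]; rewrite mxE; try exact: dyadic_nat.
apply: dyadicM; first by exists (bit0 i == bit0 j)%:Z, 1%N; rewrite expr1 -pmulrn.
by rewrite -signr_odd; case: odd; [apply: (dyadic_int (-1)) | apply: (dyadic_int 1)].
Qed.

Lemma WE8_1 : WE8 1%:M.
Proof.
split; first by rewrite trmx1 mul1mx.
split=> [i j|y]; first by rewrite mxE; apply: dyadic_nat.
by split=> [Gy|[x [Gx ->]]]; [exists y | ]; rewrite mul1mx.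
Qed.

Lemma WE8_mul A B : WE8 A -> WE8 B -> WE8 (A *m B).
Proof.
move=> [AAt [dA GA]] [BBt [dB GB]].
split; first by rewrite trmx_mul mulmxA -(mulmxA A) BBt mulmx1 AAt.
split=> [i j|y]; first by rewrite mxE; apply: dyadic_sum => k; apply: dyadicM.
split=> [/GA [_ [/GB [x [Gx ->]] ->]]|[x [Gx ->]]]; first by exists x; rewrite mulmxA.
by rewrite -mulmxA; apply/GA; exists (B *m x); split=> //; apply/GB; exists x.
Qed.

Lemma invmx_orthomx (M : mat8) : M *m M^T = 1%:M -> invmx M = M^T.
Proof.
by move=> MMt; have [uM _] := mulmx1_unit MMt; rewrite -[LHS]mulmx1 -MMt mulKmx.
Qed.

Lemma WE8_inv A : WE8 A -> WE8 (invmx A).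
Proof.
move=> [AAt [dA GA]]; have AtA := mulmx1C AAt.
rewrite invmx_orthomx //; split; first by rewrite trmxK.
split=> [i j|y]; first by rewrite mxE.
split=> [Gy|[x [/GA [x' [Gx' ->]] ->]]]; last by rewrite mulmxA AtA mul1mx.
by exists (A *m y); split; [apply/GA; exists y | rewrite mulmxA AtA mul1mx].
Qed.

Lemma WE8_unitmx M : WE8 M -> M \in unitmx.
Proof. by case=> MMt _; have [] := mulmx1_unit MMt. Qed.

Lemma WE8_sym_involution (M : mat8) :
  M^T = M -> M *m M = 1%:M -> (forall i j, dyadic (M i j)) ->
  (forall x, Gamma8 x -> Gamma8 (M *m x)) -> WE8 M.
Proof.
move=> Mt MM dM GM; split; first by rewrite Mt.
split=> // y; split=> [Gy|[x [Gx ->]]]; last exact: GM.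
by exists (M *m y); split; [apply: GM | rewrite mulmxA MM mul1mx].
Qed.

Lemma WE8_gate g : WE8 (gate g).
Proof.
apply: WE8_sym_involution; [exact: gate_sym | exact: gate_involutive |
  exact: gate_dyadic | exact: Gamma8_gate].
Qed.

Lemma generated_WE8 M : generated Sigma0 M -> WE8 M.
Proof.
elim=> [|_ /Sigma0_gate [g _ ->]|A B _ WA _ WB|A _ WA];
  [exact: WE8_1 | exact: WE8_gate | exact: WE8_mul | exact: WE8_inv].
Qed.

Definition circuit_mx (w : seq nat) : mat8 := foldr (fun g M => gate g *m M) 1%:M w.
Definition circuit_act (w : seq nat) (s : seq rat) : seq rat := foldr gate_act s w.

Lemma circuit_vec8 w s : circuit_mx w *m vec8 s = vec8 (circuit_act w s).
Proof.
by elim: w => [|g w IHw] /=; [rewrite mul1mx | rewrite -mulmxA IHw gate_vec8].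
Qed.

Lemma generated_circuit w : generated Sigma0 (circuit_mx w).
Proof.
elim: w => [|g w IHw] /=; first exact: gen_one.
by apply: gen_mul IHw; apply/gen_in/gate_Sigma0.
Qed.

Fixpoint seqs_over (n : nat) (l : seq rat) : seq (seq rat) :=
  if n is n'.+1 then [seq x :: t | x <- l, t <- seqs_over n' l] else [:: [::]].

Lemma seqs_overP n l s : size s = n -> all (mem l) s -> s \in seqs_over n l.
Proof.
elim: n s => [|n IHn] [|x s] //= [size_s] /andP [lx ls].
by apply: allpairs_f => //; apply: IHn.
Qed.

Definition E8_roots : seq (seq rat) :=
  [seq s <- seqs_over 8 [:: -1; 0; 1] ++ seqs_over 8 [:: - (1 / 2); 1 / 2]
     | Gamma8_seqb s && (dot8 s s == 2)].

Lemma int_sqr_le2 (z : int) : (z%:~R : rat) ^+ 2 <= 2 -> z%:~R \in [:: -1; 0; 1 : rat].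
Proof.
rewrite -rmorphXn /= -[2]/((2%:Z)%:~R) ler_int => z2.
have : (z == -1) || (z == 0) || (z == 1) by nia.
by case/orP => [/orP [] |] /eqP ->; rewrite !inE ?eqxx ?orbT.
Qed.

Lemma half_int_sqr_le2 (z : int) :
  ((z%:~R : rat) + 1 / 2) ^+ 2 <= 2 -> z%:~R + 1 / 2 \in [:: - (1 / 2); 1 / 2 : rat].
Proof.
move=> z2; have : (z * z + z)%:~R < (2%:Z)%:~R :> rat by rewrite intrD intrM; lra.
rewrite ltr_int => {}z2; have : (z == -1) || (z == 0) by nia.
by case/orP => /eqP ->; vm_compute.
Qed.

Lemma E8_rootsP s : size s = 8%N -> Gamma8_seq s -> dot8 s s = 2 -> s \in E8_roots.
Proof.
move=> size_s Gs ss2; have /Gamma8_seqP [b [m [z [b01 sz _]]]] := Gs.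
rewrite mem_filter ss2 eqxx andbT; apply/andP; split; first exact/Gamma8_seqbP.
rewrite mem_cat; apply/orP; case: b01 => b01; [left|right];
  apply: seqs_overP => //; apply/(all_nthP 0) => i; rewrite size_s => lt_i8;
  have := sqr_le_dot8 s lt_i8; rewrite ss2 (sz _ lt_i8) b01.
- by rewrite mul0r addr0; apply: int_sqr_le2.
- by rewrite mul1r; apply: half_int_sqr_le2.
Qed.

(* Bourbaki's simple roots alpha_1, ..., alpha_8 of E8. *)
Definition simple_roots : seq (seq rat) :=
  let h := 1 / 2 in
  [:: [:: h; - h; - h; - h; - h; - h; - h; h];
      [:: 1; 1; 0; 0; 0; 0; 0; 0];
      [:: -1; 1; 0; 0; 0; 0; 0; 0];
      [:: 0; -1; 1; 0; 0; 0; 0; 0];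
      [:: 0; 0; -1; 1; 0; 0; 0; 0];
      [:: 0; 0; 0; -1; 1; 0; 0; 0];
      [:: 0; 0; 0; 0; -1; 1; 0; 0];
      [:: 0; 0; 0; 0; 0; -1; 1; 0]].

Definition simple_root (i : nat) : seq rat := nth [::] simple_roots i.

Definition unit_coords : seq (seq rat) :=
  let h := 1 / 2 in
  [:: [:: 0; h; - h; 0; 0; 0; 0; 0];
      [:: 0; h; h; 0; 0; 0; 0; 0];
      [:: 0; h; h; 1; 0; 0; 0; 0];
      [:: 0; h; h; 1; 1; 0; 0; 0];
      [:: 0; h; h; 1; 1; 1; 0; 0];
      [:: 0; h; h; 1; 1; 1; 1; 0];
      [:: 0; h; h; 1; 1; 1; 1; 1];
      [:: 2; 5 / 2; 7 / 2; 5; 4; 3; 2; 1]].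

Definition addv8 (s t : seq rat) : seq rat := mkseq (fun i => s`_i + t`_i) 8.
Definition scalev8 (c : rat) (s : seq rat) : seq rat := mkseq (fun i => c * s`_i) 8.

Fixpoint lincomb (cs : seq rat) (vs : seq (seq rat)) : seq rat :=
  match cs, vs with
  | c :: cs', v :: vs' => addv8 (scalev8 c v) (lincomb cs' vs')
  | _, _ => nseq 8 0
  end.

Lemma simple_roots_basis :
  all (fun j => lincomb (nth [::] unit_coords j) simple_roots == unit8 j) (iota 0 8).
Proof. by vm_compute. Qed.

Lemma simple_roots_in_E8 :
  all (fun i => Gamma8_seqb (simple_root i) && (dot8 (simple_root i) (simple_root i) == 2))
    (iota 0 8).
Proof. by vm_compute. Qed.

Lemma lincomb_fixed (M : mat8) cs vs :
  {in vs, forall v, M *m vec8 v = vec8 v} ->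
  M *m vec8 (lincomb cs vs) = vec8 (lincomb cs vs).
Proof.
have vec8_0 : vec8 (nseq 8 0) = 0 by apply/colP => i; rewrite !mxE nth_nseq if_same.
elim: cs vs => [|c cs IHcs] [|v vs] Mvs //=; rewrite ?vec8_0 ?mulmx0 //.
have vec8_addv8 s t : vec8 (addv8 s t) = vec8 s + vec8 t.
  by apply/colP => i; rewrite !mxE nth_mkseq.
have vec8_scalev8 a s : vec8 (scalev8 a s) = a *: vec8 s.
  by apply/colP => i; rewrite !mxE nth_mkseq.
rewrite !vec8_addv8 !vec8_scalev8 mulmxDr -scalemxAr (Mvs v (mem_head _ _)) IHcs //.
by move=> u vs_u; apply: Mvs; rewrite inE vs_u orbT.
Qed.

Definition fixes_simple_roots (M : mat8) (k : nat) : Prop :=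
  forall i, (i < k)%N -> M *m vec8 (simple_root i) = vec8 (simple_root i).

Lemma fixes_simple_roots_eq1 M : fixes_simple_roots M 8 -> M = 1%:M.
Proof.
move=> fixM; apply: eq_mx_unit8 => j; rewrite mul1mx.
have /eqP <- := all_iota_lt simple_roots_basis (ltn_ord j).
apply: lincomb_fixed => _ /(nthP [::]) [i lt_i8 <-]; exact: fixM.
Qed.

(* A stabiliser-chain certificate: level k lists words fixing the first k simple
   roots whose images of [simple_root k] exhaust the roots having the same inner
   products with those k roots as [simple_root k].  The level sizes 240, 126, 32,
   6, 5, 4, 3, 2 multiply to the order of W(E8). *)
Definition stab_words : seq (seq (seq nat)) := [::
  [::
    [::];
    [:: 0; 1; 3; 2; 1; 2; 3; 0; 2; 0; 3; 2; 1; 2; 3; 1; 0];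
    [:: 0; 1; 3; 2; 1; 0; 1; 2; 3; 2; 3; 2; 1; 0; 1; 2; 3; 1; 0];
    [:: 1; 0; 1; 2; 3; 2; 1; 2; 1; 2; 3; 2; 1; 0; 1];
    [:: 1; 0; 1; 3; 2; 1; 0; 1; 2; 3; 2; 3; 2; 1; 0; 1; 2; 3; 1; 0; 1];
    [:: 2; 0; 1; 2; 3; 2; 1; 2; 1; 2; 3; 2; 1; 0; 2];
    [:: 3; 2; 3; 2; 0; 1; 2; 3; 0; 2; 0; 3; 2; 1; 0; 2; 3; 2; 3];
    [:: 0; 1; 3; 2; 1; 2; 1; 2; 3; 1; 0];
    [:: 3; 2; 0; 1; 2; 3; 2; 1; 2; 1; 2; 3; 2; 1; 0; 2; 3];
    [:: 2; 3; 1; 3; 0; 1; 2; 1; 0; 3; 1; 3; 2];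
    [:: 1; 0; 1; 3; 2; 0; 1; 2; 3; 0; 2; 0; 3; 2; 1; 0; 2; 3; 1; 0; 1];
    [:: 1; 3; 1; 3; 0; 1; 2; 1; 0; 3; 1; 3; 1];
    [:: 0; 1; 3; 2; 0; 1; 2; 3; 0; 2; 0; 3; 2; 1; 0; 2; 3; 1; 0];
    [:: 0; 1; 2; 1; 0];
    [:: 2; 3; 2; 0; 1; 2; 3; 0; 2; 0; 3; 2; 1; 0; 2; 3; 2];
    [:: 1; 3; 1; 2; 1; 0; 1; 2; 3; 0; 2; 0; 3; 2; 1; 0; 1; 2; 1; 3; 1];
    [:: 1; 3; 2; 0; 1; 2; 3; 0; 2; 0; 3; 2; 1; 0; 2; 3; 1];
    [:: 3; 1; 2; 1; 0; 1; 2; 3; 0; 2; 0; 3; 2; 1; 0; 1; 2; 1; 3];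
    [:: 2; 3; 2; 0; 1; 2; 1; 0; 2; 3; 2];
    [:: 1; 3; 2; 1; 2; 3; 0; 2; 0; 3; 2; 1; 2; 3; 1];
    [:: 1; 3; 1; 3; 0; 2; 0; 3; 1; 3; 1];
    [:: 3; 2; 1; 2; 3; 0; 2; 0; 3; 2; 1; 2; 3];
    [:: 0; 2; 0];
    [:: 1; 2; 3; 2; 1; 2; 3; 0; 2; 0; 3; 2; 1; 2; 3; 2; 1];
    [:: 3; 1; 2; 3; 2; 1; 2; 3; 0; 2; 0; 3; 2; 1; 2; 3; 2; 1; 3];
    [:: 2; 1; 2; 3; 2; 1; 2; 1; 2; 3; 2; 1; 2];
    [:: 3; 2; 1; 2; 3; 2; 1; 2; 1; 2; 3; 2; 1; 2; 3];
    [:: 2; 1; 2; 1; 2];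
    [:: 3; 2; 1; 2; 1; 2; 3];
    [:: 3; 1; 3; 2; 1; 0; 1; 3; 1; 2; 3; 0; 2; 0; 3; 2; 1; 3; 1; 0; 1; 2; 3; 1; 3];
    [:: 2; 1; 0; 1; 3; 1; 2; 3; 0; 2; 0; 3; 2; 1; 3; 1; 0; 1; 2];
    [:: 3; 1; 0; 1; 3; 2; 1; 2; 3; 0; 2; 0; 3; 2; 1; 2; 3; 1; 0; 1; 3];
    [:: 3; 0; 1; 2; 3; 2; 1; 2; 1; 2; 3; 2; 1; 0; 3];
    [:: 1; 3; 1; 0; 1; 3; 1; 2; 3; 0; 2; 0; 3; 2; 1; 3; 1; 0; 1; 3; 1];
    [:: 1; 0; 1; 2; 3; 1; 0; 1; 0; 2; 0; 1; 0; 1; 3; 2; 1; 0; 1];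
    [:: 1; 0; 1; 3; 0; 1; 2; 3; 0; 2; 0; 3; 2; 1; 0; 3; 1; 0; 1];
    [:: 3; 1; 2; 3; 1; 0; 1; 2; 1; 0; 1; 3; 2; 1; 3];
    [:: 2; 0; 1; 2; 3; 0; 2; 0; 3; 2; 1; 0; 2];
    [:: 3; 1; 2; 3; 2; 0; 1; 2; 1; 0; 2; 3; 2; 1; 3];
    [:: 2; 1; 0; 1; 2; 3; 0; 2; 0; 3; 2; 1; 0; 1; 2];
    [:: 3; 1; 3; 2; 1; 0; 1; 2; 3; 0; 2; 0; 3; 2; 1; 0; 1; 2; 3; 1; 3];
    [:: 1; 3; 1; 3; 2; 1; 3; 0; 1; 2; 1; 0; 3; 1; 2; 3; 1; 3; 1];
    [:: 1; 2; 3; 1; 0; 1; 2; 1; 0; 1; 3; 2; 1];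
    [:: 1; 3; 0; 1; 2; 1; 0; 3; 1];
    [:: 3; 1; 0; 1; 2; 1; 0; 1; 3];
    [:: 2; 1; 2; 1; 3; 0; 1; 2; 1; 0; 3; 1; 2; 1; 2];
    [:: 3; 1; 0; 1; 2; 3; 2; 0; 1; 0; 2; 0; 1; 0; 2; 3; 2; 1; 0; 1; 3];
    [:: 1; 3; 0; 2; 0; 3; 1];
    [:: 3; 1; 0; 2; 0; 1; 3];
    [:: 3; 2; 3; 2; 1; 0; 2; 0; 1; 2; 3; 2; 3];
    [:: 2; 1; 3; 1; 2; 3; 2; 3; 2; 1; 3; 1; 2];
    [:: 1; 2; 3; 0; 2; 0; 3; 2; 1];
    [:: 2; 0; 1; 3; 0; 1; 2; 1; 0; 3; 1; 0; 2];
    [:: 1; 3; 2; 3; 1; 3; 1; 3; 2; 3; 1; 3; 1; 3; 2; 3; 1];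
    [:: 2; 3; 0; 2; 0; 3; 2];
    [:: 3; 1; 2; 3; 2; 3; 2; 1; 3];
    [:: 3; 2; 3; 1; 3; 1; 3; 2; 3; 1; 3; 1; 3; 2; 3];
    [:: 1; 3; 1; 2; 3; 2; 3; 2; 1; 3; 1];
    [:: 3; 2; 0; 1; 2; 3; 2; 1; 2; 1; 2; 3; 2; 1; 0; 2; 3; 0; 1; 3; 2; 1; 2; 3; 0; 2; 0;
        3; 2; 1; 2; 3; 1; 0];
    [:: 2; 3; 1; 3; 0; 1; 2; 1; 0; 3; 1; 3; 2; 0; 1; 3; 2; 1; 2; 3; 0; 2; 0; 3; 2; 1; 2;
        3; 1; 0];
    [:: 1; 0; 1; 3; 2; 0; 1; 2; 3; 0; 2; 0; 3; 2; 1; 0; 2; 3; 1; 0; 1; 0; 1; 3; 2; 1; 2;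
        3; 0; 2; 0; 3; 2; 1; 2; 3; 1; 0];
    [:: 1; 3; 1; 3; 0; 1; 2; 1; 0; 3; 1; 3; 1; 0; 1; 3; 2; 1; 2; 3; 0; 2; 0; 3; 2; 1; 2;
        3; 1; 0];
    [:: 0; 1; 3; 2; 0; 1; 2; 3; 0; 2; 0; 3; 2; 1; 0; 1; 2; 3; 0; 2; 0; 3; 2; 1; 2; 3; 1;
        0];
    [:: 2; 3; 2; 0; 1; 2; 3; 0; 2; 0; 3; 2; 1; 0; 2; 3; 2; 0; 1; 3; 2; 1; 2; 3; 0; 2; 0;
        3; 2; 1; 2; 3; 1; 0];
    [:: 1; 3; 1; 2; 1; 0; 1; 2; 3; 0; 2; 0; 3; 2; 1; 0; 1; 2; 1; 3; 1; 0; 1; 3; 2; 1; 2;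
        3; 0; 2; 0; 3; 2; 1; 2; 3; 1; 0];
    [:: 1; 3; 2; 0; 1; 2; 3; 0; 2; 0; 3; 2; 1; 0; 2; 3; 1; 0; 1; 3; 2; 1; 2; 3; 0; 2; 0;
        3; 2; 1; 2; 3; 1; 0];
    [:: 3; 1; 2; 1; 0; 1; 2; 3; 0; 2; 0; 3; 2; 1; 0; 1; 2; 1; 3; 0; 1; 3; 2; 1; 2; 3; 0;
        2; 0; 3; 2; 1; 2; 3; 1; 0];
    [:: 1; 3; 2; 1; 2; 3; 0; 2; 0; 3; 2; 1; 2; 3; 1; 0; 1; 3; 2; 1; 2; 3; 0; 2; 0; 3; 2;
        1; 2; 3; 1; 0];
    [:: 1; 3; 1; 3; 0; 2; 0; 3; 1; 3; 1; 0; 1; 3; 2; 1; 2; 3; 0; 2; 0; 3; 2; 1; 2; 3; 1;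
        0];
    [:: 3; 2; 1; 2; 3; 0; 2; 0; 3; 2; 1; 2; 3; 0; 1; 3; 2; 1; 2; 3; 0; 2; 0; 3; 2; 1; 2;
        3; 1; 0];
    [:: 1; 2; 3; 2; 1; 2; 3; 0; 2; 0; 3; 2; 1; 2; 3; 2; 1; 0; 1; 3; 2; 1; 2; 3; 0; 2; 0;
        3; 2; 1; 2; 3; 1; 0];
    [:: 3; 1; 2; 3; 2; 1; 2; 3; 0; 2; 0; 3; 2; 1; 2; 3; 2; 1; 3; 0; 1; 3; 2; 1; 2; 3; 0;
        2; 0; 3; 2; 1; 2; 3; 1; 0];
    [:: 3; 2; 1; 2; 3; 2; 1; 2; 1; 2; 3; 2; 1; 2; 3; 0; 1; 3; 2; 1; 2; 3; 0; 2; 0; 3; 2;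
        1; 2; 3; 1; 0];
    [:: 3; 1; 3; 2; 1; 0; 1; 3; 1; 2; 3; 0; 2; 0; 3; 2; 1; 3; 1; 0; 1; 2; 3; 1; 3; 0; 1;
        3; 2; 1; 2; 3; 0; 2; 0; 3; 2; 1; 2; 3; 1; 0];
    [:: 2; 1; 0; 1; 3; 1; 2; 3; 0; 2; 0; 3; 2; 1; 3; 1; 0; 1; 2; 0; 1; 3; 2; 1; 2; 3; 0;
        2; 0; 3; 2; 1; 2; 3; 1; 0];
    [:: 3; 1; 0; 1; 3; 2; 1; 2; 3; 0; 2; 0; 3; 2; 1; 2; 3; 1; 0; 1; 3; 0; 1; 3; 2; 1; 2;
        3; 0; 2; 0; 3; 2; 1; 2; 3; 1; 0];
    [:: 3; 0; 1; 2; 3; 2; 1; 2; 1; 2; 3; 2; 1; 0; 3; 0; 1; 3; 2; 1; 2; 3; 0; 2; 0; 3; 2;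
        1; 2; 3; 1; 0];
    [:: 1; 3; 1; 0; 1; 3; 1; 2; 3; 0; 2; 0; 3; 2; 1; 3; 1; 0; 1; 3; 1; 0; 1; 3; 2; 1; 2;
        3; 0; 2; 0; 3; 2; 1; 2; 3; 1; 0];
    [:: 1; 0; 1; 3; 0; 1; 2; 3; 0; 2; 0; 3; 2; 1; 0; 3; 1; 0; 1; 0; 1; 3; 2; 1; 2; 3; 0;
        2; 0; 3; 2; 1; 2; 3; 1; 0];
    [:: 3; 1; 3; 2; 1; 0; 1; 2; 3; 0; 2; 0; 3; 2; 1; 0; 1; 2; 3; 1; 3; 0; 1; 3; 2; 1; 2;
        3; 0; 2; 0; 3; 2; 1; 2; 3; 1; 0];
    [:: 1; 3; 1; 3; 2; 1; 3; 0; 1; 2; 1; 0; 3; 1; 2; 3; 1; 3; 1; 0; 1; 3; 2; 1; 2; 3; 0;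
        2; 0; 3; 2; 1; 2; 3; 1; 0];
    [:: 3; 1; 0; 1; 2; 3; 2; 0; 1; 0; 2; 0; 1; 0; 2; 3; 2; 1; 0; 1; 3; 0; 1; 3; 2; 1; 2;
        3; 0; 2; 0; 3; 2; 1; 2; 3; 1; 0];
    [:: 2; 1; 3; 1; 2; 3; 2; 3; 2; 1; 3; 1; 2; 0; 1; 3; 2; 1; 2; 3; 0; 2; 0; 3; 2; 1; 2;
        3; 1; 0];
    [:: 1; 3; 2; 3; 1; 3; 1; 3; 2; 3; 1; 3; 1; 3; 2; 3; 1; 0; 1; 3; 2; 1; 2; 3; 0; 2; 0;
        3; 2; 1; 2; 3; 1; 0];
    [:: 3; 1; 2; 3; 2; 3; 2; 1; 3; 0; 1; 3; 2; 1; 2; 3; 0; 2; 0; 3; 2; 1; 2; 3; 1; 0];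
    [:: 3; 2; 3; 1; 3; 1; 3; 2; 3; 1; 3; 1; 3; 2; 3; 0; 1; 3; 2; 1; 2; 3; 0; 2; 0; 3; 2;
        1; 2; 3; 1; 0];
    [:: 1; 3; 1; 2; 3; 2; 3; 2; 1; 3; 1; 0; 1; 3; 2; 1; 2; 3; 0; 2; 0; 3; 2; 1; 2; 3; 1;
        0];
    [:: 3; 2; 0; 1; 2; 3; 2; 1; 2; 1; 2; 3; 2; 1; 0; 2; 3; 0; 1; 3; 2; 1; 0; 1; 2; 3; 2;
        3; 2; 1; 0; 1; 2; 3; 1; 0];
    [:: 2; 3; 1; 3; 0; 1; 2; 1; 0; 3; 1; 3; 2; 0; 1; 3; 2; 1; 0; 1; 2; 3; 2; 3; 2; 1; 0;
        1; 2; 3; 1; 0];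
    [:: 1; 0; 1; 3; 2; 0; 1; 2; 3; 0; 2; 0; 3; 2; 1; 0; 2; 3; 1; 0; 1; 0; 1; 3; 2; 1; 0;
        1; 2; 3; 2; 3; 2; 1; 0; 1; 2; 3; 1; 0];
    [:: 1; 3; 1; 3; 0; 1; 2; 1; 0; 3; 1; 3; 1; 0; 1; 3; 2; 1; 0; 1; 2; 3; 2; 3; 2; 1; 0;
        1; 2; 3; 1; 0];
    [:: 2; 3; 2; 0; 1; 2; 3; 0; 2; 0; 3; 2; 1; 0; 2; 3; 2; 0; 1; 3; 2; 1; 0; 1; 2; 3; 2;
        3; 2; 1; 0; 1; 2; 3; 1; 0];
    [:: 1; 3; 1; 2; 1; 0; 1; 2; 3; 0; 2; 0; 3; 2; 1; 0; 1; 2; 1; 3; 1; 0; 1; 3; 2; 1; 0;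
        1; 2; 3; 2; 3; 2; 1; 0; 1; 2; 3; 1; 0];
    [:: 1; 3; 2; 0; 1; 2; 3; 0; 2; 0; 3; 2; 1; 0; 2; 3; 1; 0; 1; 3; 2; 1; 0; 1; 2; 3; 2;
        3; 2; 1; 0; 1; 2; 3; 1; 0];
    [:: 1; 3; 2; 1; 2; 3; 0; 2; 0; 3; 2; 1; 2; 3; 1; 0; 1; 3; 2; 1; 0; 1; 2; 3; 2; 3; 2;
        1; 0; 1; 2; 3; 1; 0];
    [:: 1; 3; 1; 3; 0; 2; 0; 3; 1; 3; 1; 0; 1; 3; 2; 1; 0; 1; 2; 3; 2; 3; 2; 1; 0; 1; 2;
        3; 1; 0];
    [:: 1; 2; 3; 2; 1; 2; 3; 0; 2; 0; 3; 2; 1; 2; 3; 2; 1; 0; 1; 3; 2; 1; 0; 1; 2; 3; 2;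
        3; 2; 1; 0; 1; 2; 3; 1; 0];
    [:: 3; 1; 3; 2; 1; 0; 1; 3; 1; 2; 3; 0; 2; 0; 3; 2; 1; 3; 1; 0; 1; 2; 3; 1; 3; 0; 1;
        3; 2; 1; 0; 1; 2; 3; 2; 3; 2; 1; 0; 1; 2; 3; 1; 0];
    [:: 2; 1; 0; 1; 3; 1; 2; 3; 0; 2; 0; 3; 2; 1; 3; 1; 0; 1; 2; 0; 1; 3; 2; 1; 0; 1; 2;
        3; 2; 3; 2; 1; 0; 1; 2; 3; 1; 0];
    [:: 3; 1; 0; 1; 3; 2; 1; 2; 3; 0; 2; 0; 3; 2; 1; 2; 3; 1; 0; 1; 3; 0; 1; 3; 2; 1; 0;
        1; 2; 3; 2; 3; 2; 1; 0; 1; 2; 3; 1; 0];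
    [:: 3; 0; 1; 2; 3; 2; 1; 2; 1; 2; 3; 2; 1; 0; 3; 0; 1; 3; 2; 1; 0; 1; 2; 3; 2; 3; 2;
        1; 0; 1; 2; 3; 1; 0];
    [:: 1; 3; 1; 0; 1; 3; 1; 2; 3; 0; 2; 0; 3; 2; 1; 3; 1; 0; 1; 3; 1; 0; 1; 3; 2; 1; 0;
        1; 2; 3; 2; 3; 2; 1; 0; 1; 2; 3; 1; 0];
    [:: 1; 0; 1; 3; 0; 1; 2; 3; 0; 2; 0; 3; 2; 1; 0; 3; 1; 0; 1; 0; 1; 3; 2; 1; 0; 1; 2;
        3; 2; 3; 2; 1; 0; 1; 2; 3; 1; 0];
    [:: 1; 3; 1; 3; 2; 1; 3; 0; 1; 2; 1; 0; 3; 1; 2; 3; 1; 3; 1; 0; 1; 3; 2; 1; 0; 1; 2;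
        3; 2; 3; 2; 1; 0; 1; 2; 3; 1; 0];
    [:: 3; 2; 3; 1; 3; 1; 3; 2; 3; 1; 3; 1; 3; 2; 3; 0; 1; 3; 2; 1; 0; 1; 2; 3; 2; 3; 2;
        1; 0; 1; 2; 3; 1; 0];
    [:: 1; 3; 1; 2; 3; 2; 3; 2; 1; 3; 1; 0; 1; 3; 2; 1; 0; 1; 2; 3; 2; 3; 2; 1; 0; 1; 2;
        3; 1; 0];
    [:: 3; 2; 0; 1; 2; 3; 2; 1; 2; 1; 2; 3; 2; 1; 0; 2; 3; 1; 0; 1; 2; 3; 2; 1; 2; 1; 2;
        3; 2; 1; 0; 1];
    [:: 2; 3; 1; 3; 0; 1; 2; 1; 0; 3; 1; 3; 2; 1; 0; 1; 2; 3; 2; 1; 2; 1; 2; 3; 2; 1; 0;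
        1];
    [:: 1; 0; 1; 3; 2; 0; 1; 2; 3; 0; 2; 0; 3; 2; 1; 0; 2; 3; 2; 3; 2; 1; 2; 1; 2; 3; 2;
        1; 0; 1];
    [:: 2; 3; 2; 0; 1; 2; 3; 0; 2; 0; 3; 2; 1; 0; 2; 3; 2; 1; 0; 1; 2; 3; 2; 1; 2; 1; 2;
        3; 2; 1; 0; 1];
    [:: 1; 3; 1; 2; 1; 0; 1; 2; 3; 0; 2; 0; 3; 2; 1; 0; 1; 2; 1; 3; 0; 1; 2; 3; 2; 1; 2;
        1; 2; 3; 2; 1; 0; 1];
    [:: 1; 3; 2; 1; 2; 3; 0; 2; 0; 3; 2; 1; 2; 3; 0; 1; 2; 3; 2; 1; 2; 1; 2; 3; 2; 1; 0;
        1];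
    [:: 3; 1; 3; 2; 1; 0; 1; 3; 1; 2; 3; 0; 2; 0; 3; 2; 1; 3; 1; 0; 1; 2; 3; 1; 3; 1; 0;
        1; 2; 3; 2; 1; 2; 1; 2; 3; 2; 1; 0; 1];
    [:: 2; 1; 0; 1; 3; 1; 2; 3; 0; 2; 0; 3; 2; 1; 3; 1; 0; 1; 2; 1; 0; 1; 2; 3; 2; 1; 2;
        1; 2; 3; 2; 1; 0; 1];
    [:: 3; 1; 0; 1; 3; 2; 1; 2; 3; 0; 2; 0; 3; 2; 1; 2; 3; 1; 0; 1; 3; 1; 0; 1; 2; 3; 2;
        1; 2; 1; 2; 3; 2; 1; 0; 1];
    [:: 3; 0; 1; 2; 3; 2; 1; 2; 1; 2; 3; 2; 1; 0; 3; 1; 0; 1; 2; 3; 2; 1; 2; 1; 2; 3; 2;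
        1; 0; 1];
    [:: 1; 3; 1; 0; 1; 3; 1; 2; 3; 0; 2; 0; 3; 2; 1; 3; 1; 0; 1; 3; 0; 1; 2; 3; 2; 1; 2;
        1; 2; 3; 2; 1; 0; 1];
    [:: 1; 0; 1; 3; 0; 1; 2; 3; 0; 2; 0; 3; 2; 1; 0; 3; 2; 3; 2; 1; 2; 1; 2; 3; 2; 1; 0;
        1];
    [:: 1; 3; 1; 3; 2; 1; 3; 0; 1; 2; 1; 0; 3; 1; 2; 3; 1; 3; 0; 1; 2; 3; 2; 1; 2; 1; 2;
        3; 2; 1; 0; 1];
    [:: 1; 3; 1; 2; 3; 2; 3; 2; 1; 3; 0; 1; 2; 3; 2; 1; 2; 1; 2; 3; 2; 1; 0; 1];
    [:: 3; 2; 0; 1; 2; 3; 2; 1; 2; 1; 2; 3; 2; 1; 0; 2; 3; 1; 0; 1; 3; 2; 1; 0; 1; 2; 3;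
        2; 3; 2; 1; 0; 1; 2; 3; 1; 0; 1];
    [:: 2; 3; 1; 3; 0; 1; 2; 1; 0; 3; 1; 3; 2; 1; 0; 1; 3; 2; 1; 0; 1; 2; 3; 2; 3; 2; 1;
        0; 1; 2; 3; 1; 0; 1];
    [:: 2; 3; 2; 0; 1; 2; 3; 0; 2; 0; 3; 2; 1; 0; 2; 3; 2; 1; 0; 1; 3; 2; 1; 0; 1; 2; 3;
        2; 3; 2; 1; 0; 1; 2; 3; 1; 0; 1];
    [:: 3; 1; 3; 2; 1; 0; 1; 3; 1; 2; 3; 0; 2; 0; 3; 2; 1; 3; 1; 0; 1; 2; 3; 1; 3; 1; 0;
        1; 3; 2; 1; 0; 1; 2; 3; 2; 3; 2; 1; 0; 1; 2; 3; 1; 0; 1];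
    [:: 2; 1; 0; 1; 3; 1; 2; 3; 0; 2; 0; 3; 2; 1; 3; 1; 0; 1; 2; 1; 0; 1; 3; 2; 1; 0; 1;
        2; 3; 2; 3; 2; 1; 0; 1; 2; 3; 1; 0; 1];
    [:: 3; 1; 0; 1; 3; 2; 1; 2; 3; 0; 2; 0; 3; 2; 1; 2; 3; 1; 0; 1; 3; 1; 0; 1; 3; 2; 1;
        0; 1; 2; 3; 2; 3; 2; 1; 0; 1; 2; 3; 1; 0; 1];
    [:: 3; 0; 1; 2; 3; 2; 1; 2; 1; 2; 3; 2; 1; 0; 3; 1; 0; 1; 3; 2; 1; 0; 1; 2; 3; 2; 3;
        2; 1; 0; 1; 2; 3; 1; 0; 1];
    [:: 1; 3; 1; 0; 1; 3; 1; 2; 3; 0; 2; 0; 3; 2; 1; 3; 1; 0; 1; 3; 0; 1; 3; 2; 1; 0; 1;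
        2; 3; 2; 3; 2; 1; 0; 1; 2; 3; 1; 0; 1];
    [:: 1; 0; 1; 3; 0; 1; 2; 3; 0; 2; 0; 3; 2; 1; 0; 2; 1; 0; 1; 2; 3; 2; 3; 2; 1; 0; 1;
        2; 3; 1; 0; 1];
    [:: 1; 3; 1; 3; 2; 1; 3; 0; 1; 2; 1; 0; 3; 1; 2; 3; 1; 3; 0; 1; 3; 2; 1; 0; 1; 2; 3;
        2; 3; 2; 1; 0; 1; 2; 3; 1; 0; 1];
    [:: 1; 3; 1; 2; 3; 2; 3; 2; 1; 3; 0; 1; 3; 2; 1; 0; 1; 2; 3; 2; 3; 2; 1; 0; 1; 2; 3;
        1; 0; 1];
    [:: 3; 2; 0; 1; 2; 3; 2; 1; 2; 1; 2; 3; 2; 1; 0; 2; 3; 2; 0; 1; 2; 3; 2; 1; 2; 1; 2;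
        3; 2; 1; 0; 2];
    [:: 3; 1; 3; 2; 1; 0; 1; 3; 1; 2; 3; 0; 2; 0; 3; 2; 1; 3; 1; 0; 1; 2; 3; 1; 3; 2; 0;
        1; 2; 3; 2; 1; 2; 1; 2; 3; 2; 1; 0; 2];
    [:: 2; 1; 0; 1; 3; 1; 2; 3; 0; 2; 0; 3; 2; 1; 3; 1; 0; 1; 0; 1; 2; 3; 2; 1; 2; 1; 2;
        3; 2; 1; 0; 2];
    [:: 3; 1; 0; 1; 3; 2; 1; 2; 3; 0; 2; 0; 3; 2; 1; 2; 3; 1; 0; 1; 3; 2; 0; 1; 2; 3; 2;
        1; 2; 1; 2; 3; 2; 1; 0; 2];
    [:: 3; 0; 1; 2; 3; 2; 1; 2; 1; 2; 3; 2; 1; 0; 3; 2; 0; 1; 2; 3; 2; 1; 2; 1; 2; 3; 2;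
        1; 0; 2];
    [:: 1; 3; 1; 0; 1; 3; 1; 2; 3; 0; 2; 0; 3; 2; 1; 3; 1; 0; 1; 3; 1; 2; 0; 1; 2; 3; 2;
        1; 2; 1; 2; 3; 2; 1; 0; 2];
    [:: 1; 0; 1; 3; 0; 1; 2; 3; 0; 2; 0; 3; 2; 1; 0; 3; 1; 0; 1; 2; 0; 1; 2; 3; 2; 1; 2;
        1; 2; 3; 2; 1; 0; 2];
    [:: 1; 3; 1; 3; 2; 1; 3; 0; 1; 2; 1; 0; 3; 1; 2; 3; 1; 3; 1; 2; 0; 1; 2; 3; 2; 1; 2;
        1; 2; 3; 2; 1; 0; 2];
    [:: 1; 3; 1; 2; 3; 2; 3; 2; 1; 3; 1; 2; 0; 1; 2; 3; 2; 1; 2; 1; 2; 3; 2; 1; 0; 2];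
    [:: 3; 1; 3; 2; 1; 0; 1; 3; 1; 2; 3; 0; 2; 0; 3; 2; 1; 3; 1; 0; 1; 2; 3; 1; 2; 3; 2;
        0; 1; 2; 3; 0; 2; 0; 3; 2; 1; 0; 2; 3; 2; 3];
    [:: 2; 1; 0; 1; 3; 1; 2; 3; 0; 2; 0; 3; 2; 1; 3; 1; 0; 1; 2; 3; 2; 3; 2; 0; 1; 2; 3;
        0; 2; 0; 3; 2; 1; 0; 2; 3; 2; 3];
    [:: 3; 1; 0; 1; 3; 2; 1; 2; 3; 0; 2; 0; 3; 2; 1; 2; 3; 1; 0; 1; 2; 3; 2; 0; 1; 2; 3;
        0; 2; 0; 3; 2; 1; 0; 2; 3; 2; 3];
    [:: 3; 0; 1; 2; 3; 2; 1; 2; 1; 2; 3; 2; 1; 0; 2; 3; 2; 0; 1; 2; 3; 0; 2; 0; 3; 2; 1;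
        0; 2; 3; 2; 3];
    [:: 1; 3; 1; 0; 1; 3; 1; 2; 3; 0; 2; 0; 3; 2; 1; 3; 1; 0; 1; 3; 1; 3; 2; 3; 2; 0; 1;
        2; 3; 0; 2; 0; 3; 2; 1; 0; 2; 3; 2; 3];
    [:: 1; 0; 1; 3; 0; 1; 2; 3; 0; 2; 0; 3; 2; 1; 0; 3; 1; 0; 1; 3; 2; 3; 2; 0; 1; 2; 3;
        0; 2; 0; 3; 2; 1; 0; 2; 3; 2; 3];
    [:: 1; 3; 1; 3; 2; 1; 3; 0; 1; 2; 1; 0; 3; 1; 2; 3; 1; 3; 1; 3; 2; 3; 2; 0; 1; 2; 3;
        0; 2; 0; 3; 2; 1; 0; 2; 3; 2; 3];
    [:: 1; 3; 1; 2; 3; 2; 3; 2; 1; 3; 1; 3; 2; 3; 2; 0; 1; 2; 3; 0; 2; 0; 3; 2; 1; 0; 2;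
        3; 2; 3];
    [:: 3; 1; 3; 2; 1; 0; 1; 3; 1; 2; 3; 0; 2; 0; 3; 2; 1; 3; 1; 0; 1; 2; 3; 1; 3; 0; 1;
        3; 2; 1; 2; 1; 2; 3; 1; 0];
    [:: 2; 1; 0; 1; 3; 1; 2; 3; 0; 2; 0; 3; 2; 1; 3; 1; 0; 1; 2; 0; 1; 3; 2; 1; 2; 1; 2;
        3; 1; 0];
    [:: 3; 1; 0; 1; 3; 2; 1; 2; 3; 0; 2; 0; 3; 2; 1; 2; 3; 1; 0; 1; 3; 0; 1; 3; 2; 1; 2;
        1; 2; 3; 1; 0];
    [:: 3; 0; 1; 2; 3; 2; 1; 2; 1; 2; 3; 2; 1; 0; 3; 0; 1; 3; 2; 1; 2; 1; 2; 3; 1; 0];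
    [:: 1; 3; 1; 0; 1; 3; 1; 2; 3; 0; 2; 0; 3; 2; 1; 3; 1; 0; 1; 3; 1; 0; 1; 3; 2; 1; 2;
        1; 2; 3; 1; 0];
    [:: 1; 0; 1; 3; 0; 1; 2; 3; 0; 2; 0; 3; 2; 1; 0; 3; 1; 0; 1; 0; 1; 3; 2; 1; 2; 1; 2;
        3; 1; 0];
    [:: 1; 3; 1; 3; 2; 1; 3; 0; 1; 2; 1; 0; 3; 1; 2; 3; 1; 3; 1; 0; 1; 3; 2; 1; 2; 1; 2;
        3; 1; 0];
    [:: 1; 3; 1; 2; 3; 2; 3; 2; 1; 3; 1; 0; 1; 3; 2; 1; 2; 1; 2; 3; 1; 0];
    [:: 1; 3; 2; 1; 2; 3; 0; 2; 0; 3; 2; 1; 2; 3; 1; 3; 2; 0; 1; 2; 3; 2; 1; 2; 1; 2; 3;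
        2; 1; 0; 2; 3];
    [:: 1; 3; 1; 3; 0; 2; 0; 3; 1; 3; 1; 3; 2; 0; 1; 2; 3; 2; 1; 2; 1; 2; 3; 2; 1; 0; 2;
        3];
    [:: 3; 2; 1; 2; 3; 0; 2; 0; 3; 2; 1; 0; 1; 2; 3; 2; 1; 2; 1; 2; 3; 2; 1; 0; 2; 3];
    [:: 0; 2; 0; 3; 2; 0; 1; 2; 3; 2; 1; 2; 1; 2; 3; 2; 1; 0; 2; 3];
    [:: 1; 2; 3; 2; 1; 2; 3; 0; 2; 0; 3; 2; 1; 2; 3; 2; 1; 3; 2; 0; 1; 2; 3; 2; 1; 2; 1;
        2; 3; 2; 1; 0; 2; 3];
    [:: 3; 1; 2; 3; 2; 1; 2; 3; 0; 2; 0; 3; 2; 1; 2; 3; 2; 1; 2; 0; 1; 2; 3; 2; 1; 2; 1;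
        2; 3; 2; 1; 0; 2; 3];
    [:: 2; 1; 2; 3; 2; 1; 2; 1; 2; 3; 2; 1; 2; 3; 2; 0; 1; 2; 3; 2; 1; 2; 1; 2; 3; 2; 1;
        0; 2; 3];
    [:: 3; 2; 1; 2; 3; 2; 1; 2; 1; 2; 3; 2; 1; 0; 1; 2; 3; 2; 1; 2; 1; 2; 3; 2; 1; 0; 2;
        3];
    [:: 2; 1; 2; 1; 2; 3; 2; 0; 1; 2; 3; 2; 1; 2; 1; 2; 3; 2; 1; 0; 2; 3];
    [:: 3; 2; 1; 2; 1; 0; 1; 2; 3; 2; 1; 2; 1; 2; 3; 2; 1; 0; 2; 3];
    [:: 1; 0; 1; 2; 3; 1; 0; 1; 0; 2; 0; 1; 0; 1; 3; 2; 1; 0; 1; 3; 2; 0; 1; 2; 3; 2; 1;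
        2; 1; 2; 3; 2; 1; 0; 2; 3];
    [:: 1; 0; 1; 3; 0; 1; 2; 3; 0; 2; 0; 3; 2; 1; 0; 3; 1; 0; 1; 3; 2; 0; 1; 2; 3; 2; 1;
        2; 1; 2; 3; 2; 1; 0; 2; 3];
    [:: 1; 3; 1; 3; 2; 1; 3; 0; 1; 2; 1; 0; 3; 1; 2; 3; 1; 3; 1; 3; 2; 0; 1; 2; 3; 2; 1;
        2; 1; 2; 3; 2; 1; 0; 2; 3];
    [:: 1; 3; 1; 2; 3; 2; 3; 2; 1; 3; 1; 3; 2; 0; 1; 2; 3; 2; 1; 2; 1; 2; 3; 2; 1; 0; 2;
        3];
    [:: 1; 2; 3; 2; 1; 2; 3; 0; 2; 0; 3; 2; 1; 2; 3; 2; 1; 2; 3; 1; 3; 0; 1; 2; 1; 0; 3;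
        1; 3; 2];
    [:: 3; 1; 2; 3; 2; 1; 2; 3; 0; 2; 0; 3; 2; 1; 2; 3; 2; 1; 3; 2; 3; 1; 3; 0; 1; 2; 1;
        0; 3; 1; 3; 2];
    [:: 2; 1; 2; 3; 2; 1; 2; 1; 2; 3; 2; 1; 3; 1; 3; 0; 1; 2; 1; 0; 3; 1; 3; 2];
    [:: 3; 2; 1; 2; 3; 2; 1; 2; 1; 2; 3; 2; 1; 2; 3; 2; 3; 1; 3; 0; 1; 2; 1; 0; 3; 1; 3;
        2];
    [:: 2; 1; 2; 1; 3; 1; 3; 0; 1; 2; 1; 0; 3; 1; 3; 2];
    [:: 3; 2; 1; 2; 1; 2; 3; 2; 3; 1; 3; 0; 1; 2; 1; 0; 3; 1; 3; 2];
    [:: 3; 1; 2; 3; 1; 0; 1; 2; 1; 0; 1; 3; 2; 1; 3; 2; 3; 1; 3; 0; 1; 2; 1; 0; 3; 1; 3;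
        2];
    [:: 1; 3; 1; 3; 2; 1; 3; 0; 1; 2; 1; 0; 3; 1; 2; 3; 1; 3; 1; 2; 3; 1; 3; 0; 1; 2; 1;
        0; 3; 1; 3; 2];
    [:: 1; 3; 1; 2; 3; 2; 3; 2; 1; 3; 1; 2; 3; 1; 3; 0; 1; 2; 1; 0; 3; 1; 3; 2];
    [:: 3; 2; 1; 2; 3; 2; 1; 2; 1; 2; 3; 2; 1; 2; 3; 1; 0; 1; 3; 2; 0; 1; 2; 3; 0; 2; 0;
        3; 2; 1; 0; 2; 3; 1; 0; 1];
    [:: 2; 1; 2; 1; 2; 1; 0; 1; 3; 2; 0; 1; 2; 3; 0; 2; 0; 3; 2; 1; 0; 2; 3; 1; 0; 1];
    [:: 3; 2; 1; 2; 1; 2; 3; 1; 0; 1; 3; 2; 0; 1; 2; 3; 0; 2; 0; 3; 2; 1; 0; 2; 3; 1; 0;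
        1];
    [:: 2; 0; 1; 2; 3; 0; 2; 0; 3; 2; 1; 0; 2; 1; 0; 1; 3; 2; 0; 1; 2; 3; 0; 2; 0; 3; 2;
        1; 0; 2; 3; 1; 0; 1];
    [:: 1; 3; 1; 3; 2; 1; 3; 0; 1; 2; 1; 0; 3; 1; 2; 3; 1; 3; 0; 1; 3; 2; 0; 1; 2; 3; 0;
        2; 0; 3; 2; 1; 0; 2; 3; 1; 0; 1];
    [:: 1; 3; 1; 2; 3; 2; 3; 2; 1; 3; 0; 1; 3; 2; 0; 1; 2; 3; 0; 2; 0; 3; 2; 1; 0; 2; 3;
        1; 0; 1];
    [:: 3; 2; 1; 2; 1; 2; 3; 1; 3; 1; 3; 0; 1; 2; 1; 0; 3; 1; 3; 1];
    [:: 3; 1; 2; 3; 2; 0; 1; 2; 1; 0; 2; 3; 2; 1; 3; 1; 3; 1; 3; 0; 1; 2; 1; 0; 3; 1; 3;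
        1];
    [:: 1; 3; 1; 3; 2; 1; 3; 0; 1; 2; 1; 0; 3; 1; 2; 0; 1; 2; 1; 0; 3; 1; 3; 1];
    [:: 1; 3; 1; 2; 3; 2; 3; 2; 3; 0; 1; 2; 1; 0; 3; 1; 3; 1];
    [:: 2; 1; 0; 1; 2; 3; 0; 2; 0; 3; 2; 1; 0; 1; 2; 0; 1; 3; 2; 0; 1; 2; 3; 0; 2; 0; 3;
        2; 1; 0; 2; 3; 1; 0];
    [:: 1; 3; 1; 3; 2; 1; 3; 0; 1; 2; 1; 0; 3; 1; 2; 3; 1; 3; 1; 0; 1; 3; 2; 0; 1; 2; 3;
        0; 2; 0; 3; 2; 1; 0; 2; 3; 1; 0];
    [:: 1; 3; 1; 2; 3; 2; 3; 2; 1; 3; 1; 0; 1; 3; 2; 0; 1; 2; 3; 0; 2; 0; 3; 2; 1; 0; 2;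
        3; 1; 0];
    [:: 3; 1; 3; 2; 1; 0; 1; 2; 3; 0; 2; 0; 3; 2; 1; 0; 1; 2; 3; 1; 3; 0; 1; 2; 1; 0];
    [:: 1; 3; 1; 3; 2; 1; 3; 0; 1; 2; 1; 0; 3; 1; 2; 3; 1; 3; 1; 0; 1; 2; 1; 0];
    [:: 1; 3; 1; 2; 3; 2; 3; 2; 1; 3; 1; 0; 1; 2; 1; 0];
    [:: 1; 2; 3; 2; 1; 2; 3; 0; 2; 0; 3; 2; 1; 2; 3; 2; 1; 2; 3; 2; 0; 1; 2; 3; 0; 2; 0;
        3; 2; 1; 0; 2; 3; 2];
    [:: 3; 1; 2; 3; 2; 1; 2; 3; 0; 2; 0; 3; 2; 1; 2; 3; 2; 1; 3; 2; 3; 2; 0; 1; 2; 3; 0;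
        2; 0; 3; 2; 1; 0; 2; 3; 2];
    [:: 2; 1; 2; 3; 2; 1; 2; 1; 2; 3; 2; 1; 3; 2; 0; 1; 2; 3; 0; 2; 0; 3; 2; 1; 0; 2; 3;
        2];
    [:: 3; 2; 1; 2; 3; 2; 1; 2; 1; 2; 3; 2; 1; 2; 3; 2; 3; 2; 0; 1; 2; 3; 0; 2; 0; 3; 2;
        1; 0; 2; 3; 2];
    [:: 2; 1; 2; 1; 3; 2; 0; 1; 2; 3; 0; 2; 0; 3; 2; 1; 0; 2; 3; 2];
    [:: 3; 2; 1; 2; 1; 2; 3; 2; 3; 2; 0; 1; 2; 3; 0; 2; 0; 3; 2; 1; 0; 2; 3; 2];
    [:: 1; 2; 3; 1; 0; 1; 2; 1; 0; 1; 3; 2; 1; 2; 3; 2; 0; 1; 2; 3; 0; 2; 0; 3; 2; 1; 0;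
        2; 3; 2];
    [:: 1; 3; 1; 2; 3; 2; 3; 2; 1; 3; 1; 2; 3; 2; 0; 1; 2; 3; 0; 2; 0; 3; 2; 1; 0; 2; 3;
        2];
    [:: 3; 2; 1; 2; 3; 2; 1; 2; 1; 2; 3; 2; 1; 2; 3; 1; 3; 1; 2; 1; 0; 1; 2; 3; 0; 2; 0;
        3; 2; 1; 0; 1; 2; 1; 3; 1];
    [:: 2; 1; 2; 1; 2; 1; 3; 1; 2; 1; 0; 1; 2; 3; 0; 2; 0; 3; 2; 1; 0; 1; 2; 1; 3; 1];
    [:: 3; 2; 1; 2; 1; 2; 3; 1; 3; 1; 2; 1; 0; 1; 2; 3; 0; 2; 0; 3; 2; 1; 0; 1; 2; 1; 3;
        1];
    [:: 1; 3; 0; 1; 2; 1; 0; 1; 2; 1; 0; 1; 2; 3; 0; 2; 0; 3; 2; 1; 0; 1; 2; 1; 3; 1];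
    [:: 1; 3; 1; 2; 3; 2; 3; 1; 0; 1; 2; 3; 0; 2; 0; 3; 2; 1; 0; 1; 2; 1; 3; 1];
    [:: 3; 2; 1; 2; 1; 2; 3; 1; 3; 2; 0; 1; 2; 3; 0; 2; 0; 3; 2; 1; 0; 2; 3; 1];
    [:: 3; 1; 0; 1; 2; 1; 0; 1; 3; 1; 3; 2; 0; 1; 2; 3; 0; 2; 0; 3; 2; 1; 0; 2; 3; 1];
    [:: 1; 3; 1; 2; 3; 2; 3; 2; 1; 2; 0; 1; 2; 3; 0; 2; 0; 3; 2; 1; 0; 2; 3; 1];
    [:: 2; 1; 2; 1; 3; 0; 1; 2; 1; 0; 3; 1; 2; 1; 2; 3; 1; 2; 1; 0; 1; 2; 3; 0; 2; 0; 3;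
        2; 1; 0; 1; 2; 1; 3];
    [:: 1; 3; 1; 2; 3; 2; 3; 2; 1; 3; 1; 3; 1; 2; 1; 0; 1; 2; 3; 0; 2; 0; 3; 2; 1; 0; 1;
        2; 1; 3];
    [:: 3; 1; 0; 1; 2; 3; 2; 0; 1; 0; 2; 0; 1; 0; 2; 3; 2; 1; 0; 1; 3; 2; 3; 2; 0; 1; 2;
        1; 0; 2; 3; 2];
    [:: 1; 3; 1; 2; 3; 2; 3; 2; 1; 3; 1; 2; 3; 2; 0; 1; 2; 1; 0; 2; 3; 2];
    [:: 3; 2; 1; 2; 3; 2; 1; 2; 1; 2; 3; 2; 1; 2; 3; 1; 3; 2; 1; 2; 3; 0; 2; 0; 3; 2; 1;
        2; 3; 1];
    [:: 2; 1; 2; 1; 2; 1; 3; 2; 1; 2; 3; 0; 2; 0; 3; 2; 1; 2; 3; 1];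
    [:: 3; 2; 1; 2; 1; 2; 3; 1; 3; 2; 1; 2; 3; 0; 2; 0; 3; 2; 1; 2; 3; 1];
    [:: 1; 3; 0; 2; 0; 2; 1; 2; 3; 0; 2; 0; 3; 2; 1; 2; 3; 1];
    [:: 1; 3; 1; 2; 3; 2; 3; 2; 1; 2; 1; 2; 3; 0; 2; 0; 3; 2; 1; 2; 3; 1];
    [:: 3; 2; 1; 2; 1; 2; 3; 1; 3; 1; 3; 0; 2; 0; 3; 1; 3; 1];
    [:: 3; 1; 0; 2; 0; 1; 3; 1; 3; 1; 3; 0; 2; 0; 3; 1; 3; 1];
    [:: 1; 3; 1; 2; 3; 2; 3; 2; 3; 0; 2; 0; 3; 1; 3; 1];
    [:: 3; 2; 3; 2; 1; 0; 2; 0; 1; 2; 3; 1; 2; 3; 0; 2; 0; 3; 2; 1; 2; 3];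
    [:: 1; 3; 1; 2; 3; 2; 3; 2; 1; 3; 1; 3; 2; 1; 2; 3; 0; 2; 0; 3; 2; 1; 2; 3];
    [:: 2; 1; 3; 1; 2; 3; 2; 3; 2; 1; 3; 1; 2; 0; 2; 0];
    [:: 1; 3; 1; 2; 3; 2; 3; 2; 1; 3; 1; 0; 2; 0];
    [:: 3; 2; 1; 2; 1; 2; 3; 1; 2; 3; 2; 1; 2; 3; 0; 2; 0; 3; 2; 1; 2; 3; 2; 1];
    [:: 1; 2; 3; 0; 2; 0; 2; 1; 2; 3; 0; 2; 0; 3; 2; 1; 2; 3; 2; 1];
    [:: 1; 3; 1; 2; 3; 2; 3; 2; 1; 3; 2; 3; 2; 1; 2; 3; 0; 2; 0; 3; 2; 1; 2; 3; 2; 1];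
    [:: 2; 0; 1; 3; 0; 1; 2; 1; 0; 3; 1; 0; 2; 3; 1; 2; 3; 2; 1; 2; 3; 0; 2; 0; 3; 2; 1;
        2; 3; 2; 1; 3];
    [:: 1; 3; 1; 2; 3; 2; 3; 2; 1; 3; 1; 3; 1; 2; 3; 2; 1; 2; 3; 0; 2; 0; 3; 2; 1; 2; 3;
        2; 1; 3];
    [:: 1; 3; 2; 3; 1; 3; 1; 3; 2; 3; 1; 3; 1; 3; 2; 3; 1; 2; 1; 2; 3; 2; 1; 2; 1; 2; 3;
        2; 1; 2];
    [:: 1; 3; 1; 2; 3; 2; 3; 2; 1; 3; 1; 2; 1; 2; 3; 2; 1; 2; 1; 2; 3; 2; 1; 2];
    [:: 2; 3; 0; 2; 0; 3; 2; 3; 2; 1; 2; 3; 2; 1; 2; 1; 2; 3; 2; 1; 2; 3];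
    [:: 1; 3; 1; 2; 3; 2; 3; 2; 1; 3; 1; 3; 2; 1; 2; 3; 2; 1; 2; 1; 2; 3; 2; 1; 2; 3];
    [:: 3; 1; 2; 3; 2; 3; 2; 1; 3; 2; 1; 2; 1; 2];
    [:: 1; 3; 1; 2; 3; 2; 3; 2; 1; 3; 1; 2; 1; 2; 1; 2];
    [:: 3; 2; 3; 1; 3; 1; 3; 2; 3; 1; 3; 1; 3; 1; 2; 1; 2; 3];
    [:: 1; 3; 1; 2; 3; 2; 3; 2; 1; 3; 1; 3; 2; 1; 2; 1; 2; 3]];
  [::
    [::];
    [:: 0; 1; 2; 3; 2; 1; 2; 3; 0; 2; 0; 3; 2; 1; 2; 3; 2; 1; 0];
    [:: 3; 0; 1; 2; 3; 2; 1; 2; 3; 0; 2; 0; 3; 2; 1; 2; 3; 2; 1; 0; 3];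
    [:: 2; 0; 1; 3; 2; 1; 2; 3; 0; 2; 0; 3; 2; 1; 2; 3; 1; 0; 2];
    [:: 1; 3; 2; 1; 0; 1; 3; 1; 2; 3; 0; 2; 0; 3; 2; 1; 3; 1; 0; 1; 2; 3; 1];
    [:: 1; 0; 1; 3; 2; 1; 2; 3; 0; 2; 0; 3; 2; 1; 2; 3; 1; 0; 1];
    [:: 3; 2; 1; 0; 1; 3; 1; 2; 3; 0; 2; 0; 3; 2; 1; 3; 1; 0; 1; 2; 3];
    [:: 0; 1; 2; 3; 2; 1; 2; 1; 2; 3; 2; 1; 0];
    [:: 3; 1; 3; 0; 1; 2; 1; 0; 3; 1; 3];
    [:: 0; 1; 2; 3; 2; 0; 1; 0; 2; 0; 1; 0; 2; 3; 2; 1; 0];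
    [:: 1; 0; 1; 2; 1; 0; 1];
    [:: 1; 0; 1; 2; 3; 2; 0; 1; 0; 2; 0; 1; 0; 2; 3; 2; 1; 0; 1];
    [:: 2; 0; 1; 2; 1; 0; 2];
    [:: 0; 1; 2; 1; 2; 3; 2; 1; 0; 2; 0; 1; 2; 3; 2; 1; 2; 1; 0];
    [:: 1; 3; 0; 1; 2; 3; 2; 1; 2; 1; 2; 3; 2; 1; 0; 3; 1];
    [:: 3; 1; 0; 1; 2; 3; 2; 1; 2; 1; 2; 3; 2; 1; 0; 1; 3];
    [:: 1; 2; 1; 0; 1; 3; 1; 2; 3; 0; 2; 0; 3; 2; 1; 3; 1; 0; 1; 2; 1];
    [:: 2; 1; 0; 1; 2; 3; 1; 0; 1; 0; 2; 0; 1; 0; 1; 3; 2; 1; 0; 1; 2];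
    [:: 1; 0; 1; 3; 1; 2; 3; 0; 2; 0; 3; 2; 1; 3; 1; 0; 1];
    [:: 3; 1; 0; 1; 3; 1; 2; 3; 0; 2; 0; 3; 2; 1; 3; 1; 0; 1; 3];
    [:: 3; 0; 1; 3; 1; 2; 3; 0; 2; 0; 3; 2; 1; 3; 1; 0; 3];
    [:: 0; 1; 3; 1; 2; 3; 0; 2; 0; 3; 2; 1; 3; 1; 0];
    [:: 0; 1; 2; 3; 1; 0; 1; 0; 2; 0; 1; 0; 1; 3; 2; 1; 0];
    [:: 3; 0; 1; 2; 3; 1; 0; 1; 0; 2; 0; 1; 0; 1; 3; 2; 1; 0; 3];
    [:: 1; 3; 2; 1; 3; 0; 1; 2; 1; 0; 3; 1; 2; 3; 1];
    [:: 0; 1; 3; 0; 1; 2; 3; 0; 2; 0; 3; 2; 1; 0; 3; 1; 0];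
    [:: 0; 1; 2; 3; 0; 2; 0; 3; 2; 1; 0];
    [:: 3; 2; 1; 3; 0; 1; 2; 1; 0; 3; 1; 2; 3];
    [:: 3; 1; 2; 1; 3; 0; 1; 2; 1; 0; 3; 1; 2; 1; 3];
    [:: 1; 0; 1; 2; 3; 0; 2; 0; 3; 2; 1; 0; 1];
    [:: 2; 1; 0; 1; 3; 0; 1; 2; 3; 0; 2; 0; 3; 2; 1; 0; 3; 1; 0; 1; 2];
    [:: 1; 2; 1; 0; 1; 2; 3; 0; 2; 0; 3; 2; 1; 0; 1; 2; 1];
    [:: 3; 1; 3; 2; 0; 1; 2; 3; 0; 2; 0; 3; 2; 1; 0; 2; 3; 1; 3];
    [:: 3; 2; 3; 2; 0; 1; 2; 1; 0; 2; 3; 2; 3];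
    [:: 3; 0; 1; 2; 3; 2; 1; 2; 3; 0; 2; 0; 3; 2; 1; 2; 3; 2; 1; 0; 3; 0; 1; 2; 3; 2; 1;
        2; 3; 0; 2; 0; 3; 2; 1; 2; 3; 2; 1; 0];
    [:: 2; 0; 1; 3; 2; 1; 2; 3; 0; 2; 0; 3; 2; 1; 2; 3; 1; 0; 2; 0; 1; 2; 3; 2; 1; 2; 3;
        0; 2; 0; 3; 2; 1; 2; 3; 2; 1; 0];
    [:: 1; 3; 2; 1; 0; 1; 3; 1; 2; 3; 0; 2; 0; 3; 2; 1; 3; 1; 0; 1; 2; 3; 1; 0; 1; 2; 3;
        2; 1; 2; 3; 0; 2; 0; 3; 2; 1; 2; 3; 2; 1; 0];
    [:: 1; 0; 1; 3; 2; 1; 2; 3; 0; 2; 0; 3; 2; 1; 2; 3; 1; 0; 1; 0; 1; 2; 3; 2; 1; 2; 3;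
        0; 2; 0; 3; 2; 1; 2; 3; 2; 1; 0];
    [:: 3; 2; 1; 0; 1; 3; 1; 2; 3; 0; 2; 0; 3; 2; 1; 3; 1; 0; 1; 2; 3; 0; 1; 2; 3; 2; 1;
        2; 3; 0; 2; 0; 3; 2; 1; 2; 3; 2; 1; 0];
    [:: 0; 1; 2; 3; 2; 1; 3; 0; 2; 0; 3; 2; 1; 2; 3; 2; 1; 0];
    [:: 3; 1; 3; 0; 1; 2; 1; 0; 3; 1; 3; 0; 1; 2; 3; 2; 1; 2; 3; 0; 2; 0; 3; 2; 1; 2; 3;
        2; 1; 0];
    [:: 0; 1; 2; 3; 2; 0; 1; 0; 2; 0; 1; 0; 1; 2; 3; 0; 2; 0; 3; 2; 1; 2; 3; 2; 1; 0];
    [:: 1; 0; 1; 2; 1; 0; 1; 0; 1; 2; 3; 2; 1; 2; 3; 0; 2; 0; 3; 2; 1; 2; 3; 2; 1; 0];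
    [:: 1; 0; 1; 2; 3; 2; 0; 1; 0; 2; 0; 1; 0; 2; 3; 2; 1; 0; 1; 0; 1; 2; 3; 2; 1; 2; 3;
        0; 2; 0; 3; 2; 1; 2; 3; 2; 1; 0];
    [:: 2; 0; 1; 2; 1; 0; 2; 0; 1; 2; 3; 2; 1; 2; 3; 0; 2; 0; 3; 2; 1; 2; 3; 2; 1; 0];
    [:: 0; 1; 2; 1; 2; 3; 2; 1; 0; 2; 0; 1; 2; 3; 2; 1; 3; 2; 1; 2; 3; 0; 2; 0; 3; 2; 1;
        2; 3; 2; 1; 0];
    [:: 1; 3; 0; 1; 2; 3; 2; 1; 2; 1; 2; 3; 2; 1; 0; 3; 1; 0; 1; 2; 3; 2; 1; 2; 3; 0; 2;
        0; 3; 2; 1; 2; 3; 2; 1; 0];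
    [:: 3; 1; 0; 1; 2; 3; 2; 1; 2; 1; 2; 3; 2; 1; 0; 1; 3; 0; 1; 2; 3; 2; 1; 2; 3; 0; 2;
        0; 3; 2; 1; 2; 3; 2; 1; 0];
    [:: 1; 2; 1; 0; 1; 3; 1; 2; 3; 0; 2; 0; 3; 2; 1; 3; 1; 0; 1; 2; 1; 0; 1; 2; 3; 2; 1;
        2; 3; 0; 2; 0; 3; 2; 1; 2; 3; 2; 1; 0];
    [:: 2; 1; 0; 1; 2; 3; 1; 0; 1; 0; 2; 0; 1; 0; 1; 3; 2; 1; 0; 1; 2; 0; 1; 2; 3; 2; 1;
        2; 3; 0; 2; 0; 3; 2; 1; 2; 3; 2; 1; 0];
    [:: 1; 0; 1; 3; 1; 2; 3; 0; 2; 0; 3; 2; 1; 3; 1; 0; 1; 0; 1; 2; 3; 2; 1; 2; 3; 0; 2;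
        0; 3; 2; 1; 2; 3; 2; 1; 0];
    [:: 3; 1; 0; 1; 3; 1; 2; 3; 0; 2; 0; 3; 2; 1; 3; 1; 0; 1; 3; 0; 1; 2; 3; 2; 1; 2; 3;
        0; 2; 0; 3; 2; 1; 2; 3; 2; 1; 0];
    [:: 3; 0; 1; 3; 1; 2; 3; 0; 2; 0; 3; 2; 1; 3; 1; 0; 3; 0; 1; 2; 3; 2; 1; 2; 3; 0; 2;
        0; 3; 2; 1; 2; 3; 2; 1; 0];
    [:: 0; 1; 3; 1; 2; 3; 0; 2; 0; 3; 2; 1; 3; 2; 3; 2; 1; 2; 3; 0; 2; 0; 3; 2; 1; 2; 3;
        2; 1; 0];
    [:: 0; 1; 2; 3; 1; 0; 1; 0; 2; 0; 1; 0; 1; 2; 1; 2; 3; 0; 2; 0; 3; 2; 1; 2; 3; 2; 1;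
        0];
    [:: 3; 0; 1; 2; 3; 1; 0; 1; 0; 2; 0; 1; 0; 1; 3; 2; 1; 0; 3; 0; 1; 2; 3; 2; 1; 2; 3;
        0; 2; 0; 3; 2; 1; 2; 3; 2; 1; 0];
    [:: 1; 3; 2; 1; 3; 0; 1; 2; 1; 0; 3; 1; 2; 3; 1; 0; 1; 2; 3; 2; 1; 2; 3; 0; 2; 0; 3;
        2; 1; 2; 3; 2; 1; 0];
    [:: 0; 1; 3; 0; 1; 2; 3; 0; 2; 0; 3; 2; 1; 0; 3; 2; 3; 2; 1; 2; 3; 0; 2; 0; 3; 2; 1;
        2; 3; 2; 1; 0];
    [:: 0; 1; 2; 3; 0; 2; 0; 2; 1; 2; 3; 0; 2; 0; 3; 2; 1; 2; 3; 2; 1; 0];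
    [:: 3; 2; 1; 3; 0; 1; 2; 1; 0; 3; 1; 2; 3; 0; 1; 2; 3; 2; 1; 2; 3; 0; 2; 0; 3; 2; 1;
        2; 3; 2; 1; 0];
    [:: 3; 1; 2; 1; 3; 0; 1; 2; 1; 0; 3; 1; 2; 1; 3; 0; 1; 2; 3; 2; 1; 2; 3; 0; 2; 0; 3;
        2; 1; 2; 3; 2; 1; 0];
    [:: 1; 0; 1; 2; 3; 0; 2; 0; 3; 2; 1; 0; 1; 0; 1; 2; 3; 2; 1; 2; 3; 0; 2; 0; 3; 2; 1;
        2; 3; 2; 1; 0];
    [:: 2; 1; 0; 1; 3; 0; 1; 2; 3; 0; 2; 0; 3; 2; 1; 0; 3; 1; 0; 1; 2; 0; 1; 2; 3; 2; 1;
        2; 3; 0; 2; 0; 3; 2; 1; 2; 3; 2; 1; 0];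
    [:: 1; 2; 1; 0; 1; 2; 3; 0; 2; 0; 3; 2; 1; 0; 1; 2; 1; 0; 1; 2; 3; 2; 1; 2; 3; 0; 2;
        0; 3; 2; 1; 2; 3; 2; 1; 0];
    [:: 3; 1; 3; 2; 0; 1; 2; 3; 0; 2; 0; 3; 2; 1; 0; 2; 3; 1; 3; 0; 1; 2; 3; 2; 1; 2; 3;
        0; 2; 0; 3; 2; 1; 2; 3; 2; 1; 0];
    [:: 3; 2; 3; 2; 0; 1; 2; 1; 0; 2; 3; 2; 3; 0; 1; 2; 3; 2; 1; 2; 3; 0; 2; 0; 3; 2; 1;
        2; 3; 2; 1; 0];
    [:: 3; 1; 3; 0; 1; 2; 1; 0; 3; 1; 0; 1; 2; 3; 2; 1; 2; 3; 0; 2; 0; 3; 2; 1; 2; 3; 2;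
        1; 0; 3];
    [:: 0; 1; 2; 3; 2; 0; 1; 0; 2; 0; 1; 0; 2; 3; 2; 1; 0; 3; 0; 1; 2; 3; 2; 1; 2; 3; 0;
        2; 0; 3; 2; 1; 2; 3; 2; 1; 0; 3];
    [:: 1; 0; 1; 2; 1; 0; 1; 3; 0; 1; 2; 3; 2; 1; 2; 3; 0; 2; 0; 3; 2; 1; 2; 3; 2; 1; 0;
        3];
    [:: 1; 0; 1; 2; 3; 2; 0; 1; 0; 2; 0; 1; 0; 2; 3; 2; 1; 0; 1; 3; 0; 1; 2; 3; 2; 1; 2;
        3; 0; 2; 0; 3; 2; 1; 2; 3; 2; 1; 0; 3];
    [:: 2; 0; 1; 2; 1; 0; 2; 3; 0; 1; 2; 3; 2; 1; 2; 3; 0; 2; 0; 3; 2; 1; 2; 3; 2; 1; 0;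
        3];
    [:: 1; 3; 2; 1; 3; 0; 1; 2; 1; 0; 3; 1; 2; 3; 1; 3; 0; 1; 2; 3; 2; 1; 2; 3; 0; 2; 0;
        3; 2; 1; 2; 3; 2; 1; 0; 3];
    [:: 0; 1; 3; 0; 1; 2; 3; 0; 2; 0; 3; 2; 1; 0; 3; 1; 0; 3; 0; 1; 2; 3; 2; 1; 2; 3; 0;
        2; 0; 3; 2; 1; 2; 3; 2; 1; 0; 3];
    [:: 0; 1; 2; 3; 0; 2; 0; 3; 2; 1; 0; 3; 0; 1; 2; 3; 2; 1; 2; 3; 0; 2; 0; 3; 2; 1; 2;
        3; 2; 1; 0; 3];
    [:: 3; 2; 1; 3; 0; 1; 2; 1; 0; 3; 1; 2; 0; 1; 2; 3; 2; 1; 2; 3; 0; 2; 0; 3; 2; 1; 2;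
        3; 2; 1; 0; 3];
    [:: 3; 1; 2; 1; 3; 0; 1; 2; 1; 0; 3; 1; 2; 1; 0; 1; 2; 3; 2; 1; 2; 3; 0; 2; 0; 3; 2;
        1; 2; 3; 2; 1; 0; 3];
    [:: 1; 0; 1; 2; 3; 0; 2; 0; 3; 2; 1; 0; 1; 3; 0; 1; 2; 3; 2; 1; 2; 3; 0; 2; 0; 3; 2;
        1; 2; 3; 2; 1; 0; 3];
    [:: 2; 1; 0; 1; 3; 0; 1; 2; 3; 0; 2; 0; 3; 2; 1; 0; 3; 1; 0; 1; 2; 3; 0; 1; 2; 3; 2;
        1; 2; 3; 0; 2; 0; 3; 2; 1; 2; 3; 2; 1; 0; 3];
    [:: 1; 2; 1; 0; 1; 2; 3; 0; 2; 0; 3; 2; 1; 0; 1; 2; 1; 3; 0; 1; 2; 3; 2; 1; 2; 3; 0;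
        2; 0; 3; 2; 1; 2; 3; 2; 1; 0; 3];
    [:: 3; 1; 3; 2; 0; 1; 2; 3; 0; 2; 0; 3; 2; 1; 0; 2; 3; 1; 0; 1; 2; 3; 2; 1; 2; 3; 0;
        2; 0; 3; 2; 1; 2; 3; 2; 1; 0; 3];
    [:: 3; 2; 3; 2; 0; 1; 2; 1; 0; 2; 3; 2; 0; 1; 2; 3; 2; 1; 2; 3; 0; 2; 0; 3; 2; 1; 2;
        3; 2; 1; 0; 3];
    [:: 3; 1; 3; 0; 1; 2; 1; 0; 3; 1; 3; 2; 0; 1; 3; 2; 1; 2; 3; 0; 2; 0; 3; 2; 1; 2; 3;
        1; 0; 2];
    [:: 0; 1; 2; 3; 2; 0; 1; 0; 2; 0; 1; 0; 2; 3; 2; 1; 0; 2; 0; 1; 3; 2; 1; 2; 3; 0; 2;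
        0; 3; 2; 1; 2; 3; 1; 0; 2];
    [:: 1; 0; 1; 2; 1; 0; 1; 2; 0; 1; 3; 2; 1; 2; 3; 0; 2; 0; 3; 2; 1; 2; 3; 1; 0; 2];
    [:: 1; 0; 1; 2; 3; 2; 0; 1; 0; 2; 0; 1; 0; 2; 3; 2; 1; 0; 1; 2; 0; 1; 3; 2; 1; 2; 3;
        0; 2; 0; 3; 2; 1; 2; 3; 1; 0; 2];
    [:: 0; 1; 2; 1; 2; 3; 2; 1; 0; 2; 0; 1; 2; 3; 2; 1; 2; 1; 0; 2; 0; 1; 3; 2; 1; 2; 3;
        0; 2; 0; 3; 2; 1; 2; 3; 1; 0; 2];
    [:: 2; 1; 0; 1; 3; 0; 1; 2; 3; 0; 2; 0; 3; 2; 1; 0; 3; 1; 0; 1; 0; 1; 3; 2; 1; 2; 3;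
        0; 2; 0; 3; 2; 1; 2; 3; 1; 0; 2];
    [:: 1; 2; 1; 0; 1; 2; 3; 0; 2; 0; 3; 2; 1; 0; 1; 2; 1; 2; 0; 1; 3; 2; 1; 2; 3; 0; 2;
        0; 3; 2; 1; 2; 3; 1; 0; 2];
    [:: 3; 1; 3; 2; 0; 1; 2; 3; 0; 2; 0; 3; 2; 1; 0; 2; 3; 1; 3; 2; 0; 1; 3; 2; 1; 2; 3;
        0; 2; 0; 3; 2; 1; 2; 3; 1; 0; 2];
    [:: 3; 2; 3; 2; 0; 1; 2; 1; 0; 2; 3; 2; 3; 2; 0; 1; 3; 2; 1; 2; 3; 0; 2; 0; 3; 2; 1;
        2; 3; 1; 0; 2];
    [:: 3; 1; 3; 0; 1; 2; 1; 0; 3; 1; 3; 1; 3; 2; 1; 0; 1; 3; 1; 2; 3; 0; 2; 0; 3; 2; 1;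
        3; 1; 0; 1; 2; 3; 1];
    [:: 0; 1; 2; 3; 2; 0; 1; 0; 2; 0; 1; 0; 2; 3; 2; 1; 0; 1; 3; 2; 1; 0; 1; 3; 1; 2; 3;
        0; 2; 0; 3; 2; 1; 3; 1; 0; 1; 2; 3; 1];
    [:: 1; 0; 1; 2; 1; 0; 3; 2; 1; 0; 1; 3; 1; 2; 3; 0; 2; 0; 3; 2; 1; 3; 1; 0; 1; 2; 3;
        1];
    [:: 2; 0; 1; 2; 1; 0; 2; 1; 3; 2; 1; 0; 1; 3; 1; 2; 3; 0; 2; 0; 3; 2; 1; 3; 1; 0; 1;
        2; 3; 1];
    [:: 0; 1; 2; 1; 2; 3; 2; 1; 0; 2; 0; 1; 2; 3; 2; 1; 2; 1; 0; 1; 3; 2; 1; 0; 1; 3; 1;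
        2; 3; 0; 2; 0; 3; 2; 1; 3; 1; 0; 1; 2; 3; 1];
    [:: 3; 2; 3; 2; 0; 1; 2; 1; 0; 2; 3; 2; 3; 1; 3; 2; 1; 0; 1; 3; 1; 2; 3; 0; 2; 0; 3;
        2; 1; 3; 1; 0; 1; 2; 3; 1];
    [:: 3; 1; 3; 0; 1; 2; 1; 0; 3; 1; 3; 1; 0; 1; 3; 2; 1; 2; 3; 0; 2; 0; 3; 2; 1; 2; 3;
        1; 0; 1];
    [:: 0; 1; 2; 3; 2; 0; 1; 0; 2; 0; 1; 0; 2; 3; 2; 1; 0; 1; 0; 1; 3; 2; 1; 2; 3; 0; 2;
        0; 3; 2; 1; 2; 3; 1; 0; 1];
    [:: 1; 0; 1; 2; 3; 2; 0; 1; 0; 2; 0; 1; 0; 2; 3; 2; 3; 2; 1; 2; 3; 0; 2; 0; 3; 2; 1;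
        2; 3; 1; 0; 1];
    [:: 2; 0; 1; 2; 1; 0; 2; 1; 0; 1; 3; 2; 1; 2; 3; 0; 2; 0; 3; 2; 1; 2; 3; 1; 0; 1];
    [:: 0; 1; 2; 1; 2; 3; 2; 1; 0; 2; 0; 1; 2; 3; 2; 1; 2; 1; 0; 1; 0; 1; 3; 2; 1; 2; 3;
        0; 2; 0; 3; 2; 1; 2; 3; 1; 0; 1];
    [:: 3; 1; 3; 0; 1; 2; 1; 0; 3; 1; 2; 1; 0; 1; 3; 1; 2; 3; 0; 2; 0; 3; 2; 1; 3; 1; 0;
        1; 2; 3];
    [:: 1; 0; 1; 2; 1; 0; 1; 3; 2; 1; 0; 1; 3; 1; 2; 3; 0; 2; 0; 3; 2; 1; 3; 1; 0; 1; 2;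
        3];
    [:: 1; 0; 1; 2; 3; 2; 0; 1; 0; 2; 0; 1; 0; 2; 3; 2; 1; 0; 1; 3; 2; 1; 0; 1; 3; 1; 2;
        3; 0; 2; 0; 3; 2; 1; 3; 1; 0; 1; 2; 3];
    [:: 2; 0; 1; 2; 1; 0; 2; 3; 2; 1; 0; 1; 3; 1; 2; 3; 0; 2; 0; 3; 2; 1; 3; 1; 0; 1; 2;
        3];
    [:: 0; 1; 2; 1; 2; 3; 2; 1; 0; 2; 0; 1; 2; 3; 2; 1; 2; 1; 0; 3; 2; 1; 0; 1; 3; 1; 2;
        3; 0; 2; 0; 3; 2; 1; 3; 1; 0; 1; 2; 3];
    [:: 0; 1; 2; 3; 2; 0; 1; 0; 2; 0; 1; 0; 1; 2; 1; 2; 3; 2; 1; 0];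
    [:: 1; 0; 1; 2; 1; 0; 1; 0; 1; 2; 3; 2; 1; 2; 1; 2; 3; 2; 1; 0];
    [:: 1; 0; 1; 2; 3; 2; 0; 1; 0; 2; 0; 1; 0; 2; 3; 2; 1; 0; 1; 0; 1; 2; 3; 2; 1; 2; 1;
        2; 3; 2; 1; 0];
    [:: 2; 0; 1; 2; 1; 0; 2; 0; 1; 2; 3; 2; 1; 2; 1; 2; 3; 2; 1; 0];
    [:: 0; 1; 2; 1; 2; 3; 2; 1; 0; 2; 0; 1; 2; 3; 2; 1; 3; 2; 1; 2; 1; 2; 3; 2; 1; 0];
    [:: 2; 1; 0; 1; 2; 3; 1; 0; 1; 0; 2; 0; 1; 0; 1; 3; 2; 1; 0; 1; 2; 3; 1; 3; 0; 1; 2;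
        1; 0; 3; 1; 3];
    [:: 3; 0; 1; 3; 1; 2; 3; 0; 2; 0; 3; 2; 1; 3; 1; 0; 1; 3; 0; 1; 2; 1; 0; 3; 1; 3];
    [:: 0; 1; 2; 3; 1; 0; 1; 0; 2; 0; 1; 0; 1; 3; 2; 1; 0; 3; 1; 3; 0; 1; 2; 1; 0; 3; 1;
        3];
    [:: 3; 0; 1; 2; 3; 1; 0; 1; 0; 2; 0; 1; 0; 1; 3; 2; 1; 0; 1; 3; 0; 1; 2; 1; 0; 3; 1;
        3];
    [:: 0; 1; 2; 3; 0; 2; 0; 3; 2; 1; 0; 3; 1; 3; 0; 1; 2; 1; 0; 3; 1; 3];
    [:: 3; 1; 2; 1; 3; 0; 1; 2; 1; 0; 3; 1; 2; 3; 0; 1; 2; 1; 0; 3; 1; 3];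
    [:: 1; 0; 1; 2; 3; 0; 2; 0; 3; 2; 1; 0; 1; 3; 1; 3; 0; 1; 2; 1; 0; 3; 1; 3];
    [:: 1; 2; 1; 0; 1; 2; 3; 0; 2; 0; 3; 2; 1; 0; 1; 2; 1; 3; 1; 3; 0; 1; 2; 1; 0; 3; 1;
        3];
    [:: 3; 1; 3; 2; 0; 1; 2; 3; 0; 2; 0; 3; 2; 1; 0; 2; 0; 1; 2; 1; 0; 3; 1; 3];
    [:: 3; 2; 3; 2; 0; 1; 2; 1; 0; 2; 3; 2; 1; 3; 0; 1; 2; 1; 0; 3; 1; 3];
    [:: 3; 0; 1; 2; 3; 1; 0; 1; 0; 2; 0; 1; 0; 1; 3; 2; 1; 0; 3; 0; 1; 2; 3; 2; 0; 1; 0;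
        2; 0; 1; 0; 2; 3; 2; 1; 0];
    [:: 1; 0; 1; 2; 3; 0; 2; 0; 3; 2; 1; 0; 1; 0; 1; 2; 3; 2; 0; 1; 0; 2; 0; 1; 0; 2; 3;
        2; 1; 0];
    [:: 3; 1; 3; 2; 0; 1; 2; 3; 0; 2; 0; 3; 2; 1; 0; 2; 3; 1; 3; 0; 1; 2; 3; 2; 0; 1; 0;
        2; 0; 1; 0; 2; 3; 2; 1; 0];
    [:: 3; 2; 3; 2; 0; 1; 2; 1; 0; 2; 3; 2; 3; 0; 1; 2; 3; 2; 0; 1; 0; 2; 0; 1; 0; 2; 3;
        2; 1; 0];
    [:: 3; 2; 3; 2; 0; 1; 2; 1; 0; 2; 3; 2; 3; 1; 0; 1; 2; 1; 0; 1]];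
  [::
    [::];
    [:: 1; 3; 0; 1; 2; 3; 0; 2; 0; 3; 2; 1; 0; 3; 1];
    [:: 3; 1; 3; 2; 1; 3; 0; 1; 2; 1; 0; 3; 1; 2; 3; 1; 3];
    [:: 2; 1; 3; 0; 1; 2; 1; 0; 3; 1; 2];
    [:: 3; 0; 1; 2; 3; 0; 2; 0; 3; 2; 1; 0; 3];
    [:: 2; 3; 1; 0; 1; 2; 1; 0; 1; 3; 2];
    [:: 1; 2; 1; 3; 0; 1; 2; 1; 0; 3; 1; 2; 1];
    [:: 2; 1; 3; 1; 3; 2; 1; 3; 0; 1; 2; 1; 0; 3; 1; 2; 3; 1; 3; 1; 2];
    [:: 1; 2; 1; 2; 1; 3; 0; 1; 2; 1; 0; 3; 1; 2; 1; 2; 1];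
    [:: 3; 1; 3; 1; 3; 0; 1; 2; 1; 0; 3; 1; 3; 1; 3];
    [:: 3; 0; 1; 2; 1; 0; 3];
    [:: 3; 1; 3; 2; 1; 2; 3; 0; 2; 0; 3; 2; 1; 2; 3; 1; 3];
    [:: 2; 1; 2; 3; 0; 2; 0; 3; 2; 1; 2];
    [:: 0; 1; 3; 0; 1; 2; 1; 0; 3; 1; 0];
    [:: 3; 0; 2; 0; 3];
    [:: 3; 1; 3; 1; 2; 3; 0; 2; 0; 3; 2; 1; 3; 1; 3];
    [:: 1; 2; 1; 3; 0; 1; 2; 1; 0; 3; 1; 2; 3; 0; 1; 2; 3; 0; 2; 0; 3; 2; 1; 0; 3; 1];
    [:: 3; 1; 3; 1; 3; 0; 1; 2; 1; 0; 3; 1; 3; 1; 3; 1; 3; 0; 1; 2; 3; 0; 2; 0; 3; 2; 1;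
        0; 3; 1];
    [:: 3; 0; 1; 2; 1; 0; 3; 1; 3; 0; 1; 2; 3; 0; 2; 0; 3; 2; 1; 0; 3; 1];
    [:: 0; 1; 3; 0; 1; 2; 1; 0; 3; 1; 0; 1; 3; 0; 1; 2; 3; 0; 2; 0; 3; 2; 1; 0; 3; 1];
    [:: 3; 0; 2; 0; 3; 1; 3; 0; 1; 2; 3; 0; 2; 0; 3; 2; 1; 0; 3; 1];
    [:: 3; 1; 3; 1; 2; 3; 0; 2; 0; 3; 2; 1; 3; 1; 3; 1; 3; 0; 1; 2; 3; 0; 2; 0; 3; 2; 1;
        0; 3; 1];
    [:: 3; 0; 1; 2; 1; 0; 1; 3; 2; 1; 3; 0; 1; 2; 1; 0; 3; 1; 2; 3; 1; 3];
    [:: 3; 0; 2; 0; 1; 3; 2; 1; 3; 0; 1; 2; 1; 0; 3; 1; 2; 3; 1; 3];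
    [:: 3; 1; 3; 1; 2; 3; 0; 2; 0; 3; 2; 1; 2; 1; 3; 0; 1; 2; 1; 0; 3; 1; 2; 3; 1; 3];
    [:: 3; 0; 1; 2; 1; 0; 3; 2; 1; 3; 0; 1; 2; 1; 0; 3; 1; 2];
    [:: 3; 0; 2; 0; 3; 2; 1; 3; 0; 1; 2; 1; 0; 3; 1; 2];
    [:: 3; 1; 3; 1; 2; 3; 0; 2; 0; 3; 2; 1; 3; 1; 3; 2; 1; 3; 0; 1; 2; 1; 0; 3; 1; 2];
    [:: 3; 1; 3; 1; 2; 3; 0; 2; 0; 3; 2; 1; 3; 1; 0; 1; 2; 3; 0; 2; 0; 3; 2; 1; 0; 3];
    [:: 3; 1; 3; 1; 2; 3; 0; 2; 0; 3; 2; 1; 3; 1; 3; 2; 3; 1; 0; 1; 2; 1; 0; 1; 3; 2];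
    [:: 3; 1; 3; 1; 2; 3; 0; 2; 0; 3; 2; 1; 3; 1; 3; 1; 2; 1; 3; 0; 1; 2; 1; 0; 3; 1; 2;
        1];
    [:: 3; 1; 3; 1; 2; 3; 0; 2; 0; 3; 2; 1; 3; 1; 3; 1; 2; 1; 3; 0; 1; 2; 1; 0; 3; 1; 2;
        3; 0; 1; 2; 3; 0; 2; 0; 3; 2; 1; 0; 3; 1]];
  [::
    [::];
    [:: 3; 2; 0; 1; 2; 3; 0; 2; 0; 3; 2; 1; 0; 2; 3];
    [:: 3; 2; 1; 0; 1; 2; 3; 0; 2; 0; 3; 2; 1; 0; 1; 2; 3];
    [:: 1; 2; 3; 2; 0; 1; 2; 1; 0; 2; 3; 2; 1];
    [:: 1; 3; 2; 1; 0; 1; 2; 3; 0; 2; 0; 3; 2; 1; 0; 1; 2; 3; 1];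
    [:: 3; 2; 0; 1; 2; 1; 0; 2; 3]];
  [::
    [::];
    [:: 3; 1; 3; 0; 2; 0; 3; 1; 3];
    [:: 2; 3; 2; 1; 0; 2; 0; 1; 2; 3; 2];
    [:: 1; 0; 2; 0; 1];
    [:: 1; 2; 3; 2; 1; 0; 2; 0; 1; 2; 3; 2; 1]];
  [::
    [::];
    [:: 2; 1; 3; 2; 1; 2; 3; 0; 2; 0; 3; 2; 1; 2; 3; 1; 2];
    [:: 3; 2; 3; 2; 1; 2; 3; 0; 2; 0; 3; 2; 1; 2; 3; 2; 3];
    [:: 1; 3; 2; 1; 2; 1; 2; 3; 1]];
  [::
    [::];
    [:: 3; 1; 3; 2; 1; 2; 1; 2; 3; 1; 3];
    [:: 1; 2; 1; 2; 3; 2; 1; 0; 2; 0; 1; 2; 3; 2; 1; 2; 1]];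
  [::
    [::];
    [:: 2; 3; 2; 1; 2; 3; 0; 2; 0; 3; 2; 1; 2; 3; 2]]].

Definition same_ips (k : nat) (z : seq rat) : bool :=
  all (fun i => dot8 z (simple_root i) == dot8 (simple_root k) (simple_root i)) (iota 0 k).

Lemma stab_words_fix :
  all (fun k => all (fun w => all (fun i => circuit_act w (simple_root i) == simple_root i)
                                  (iota 0 k))
                    (nth [::] stab_words k))
      (iota 0 8).
Proof. by vm_compute. Qed.

Lemma stab_words_transitive :
  all (fun k => let reached := [seq circuit_act w (simple_root k) | w <- nth [::] stab_words k] in
                all (fun z => z \in reached) [seq z <- E8_roots | same_ips k z])
      (iota 0 8).
Proof. by vm_compute. Qed.

Lemma stab_word_fixes k w :
  (k < 8)%N -> w \in nth [::] stab_words k -> fixes_simple_roots (circuit_mx w) k.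
Proof.
move=> lt_k8 w_k i lt_ik; rewrite circuit_vec8; congr vec8; apply/eqP.
have /allP/(_ w w_k) := all_iota_lt stab_words_fix lt_k8.
by move/all_iota_lt; apply.
Qed.

Lemma stab_word_exists k z : (k < 8)%N -> z \in E8_roots -> same_ips k z ->
  exists2 w, w \in nth [::] stab_words k & circuit_act w (simple_root k) = z.
Proof.
move=> lt_k8 z_root z_ips.
have /allP/(_ z) := all_iota_lt stab_words_transitive lt_k8.
by rewrite mem_filter z_ips z_root => /(_ isT)/mapP [w w_k ->]; exists w.
Qed.

Lemma descent_step M k : (k < 8)%N -> WE8 M -> fixes_simple_roots M k ->
  exists w, fixes_simple_roots (invmx (circuit_mx w) *m M) k.+1.
Proof.
move=> lt_k8 WM fixM; have [MMt [_ GM]] := WM; have MtM := mulmx1C MMt.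
set z := seq8 (M *m vec8 (simple_root k)).
have Mr : M *m vec8 (simple_root k) = vec8 z by rewrite seq8K.
have /andP [/Gamma8_seqbP G_rk /eqP rk2] := all_iota_lt simple_roots_in_E8 lt_k8.
have z_root : z \in E8_roots.
  apply: E8_rootsP; first exact: size_seq8.
    apply/Gamma8_vec8; rewrite -Mr; apply/GM.
    by exists (vec8 (simple_root k)); split=> //; apply/Gamma8_vec8.
  by rewrite -vdot_vec8 -Mr vdot_orthomx // vdot_vec8.
have z_ips : same_ips k z.
  apply/allP => i; rewrite mem_iota => /andP [_ lt_ik]; apply/eqP.
  have := vdot_orthomx (vec8 (simple_root k)) (vec8 (simple_root i)) MtM.
  by rewrite Mr (fixM i lt_ik) !vdot_vec8.
have [w w_k wz] := stab_word_exists lt_k8 z_root z_ips.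
have fixW := stab_word_fixes lt_k8 w_k.
have uW := WE8_unitmx (generated_WE8 (generated_circuit w)).
exists w => i; rewrite ltnS leq_eqVlt => /orP [/eqP ->|lt_ik].
  by rewrite -mulmxA Mr -wz -circuit_vec8 mulKmx.
by rewrite -mulmxA (fixM i lt_ik) -{1}(fixW i lt_ik) mulKmx.
Qed.

Lemma WE8_generated_fixing n M :
  WE8 M -> fixes_simple_roots M (8 - n) -> generated Sigma0 M.
Proof.
elim: n M => [|n IHn] M WM fixM.
  by rewrite (fixes_simple_roots_eq1 fixM); apply: gen_one.
have [|w fixWM] := descent_step _ WM fixM; first by lia.
have WW := generated_WE8 (generated_circuit w).
rewrite -(mulKVmx (WE8_unitmx WW) M); apply: gen_mul (generated_circuit w) _.
apply: IHn; first by apply: WE8_mul WM; apply: WE8_inv.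
by move=> i lt_i; apply: fixWM; lia.
Qed.

Lemma WE8_generated M : WE8 M -> generated Sigma0 M.
Proof. by move=> WM; apply: (@WE8_generated_fixing 8) => // i; rewrite subnn. Qed.

Definition mx_of_rows (rows : seq (seq rat)) : mat8 :=
  \matrix_(i < 8, j < 8) (nth [::] rows i)`_j.
Definition rows_act (rows : seq (seq rat)) (s : seq rat) : seq rat :=
  mkseq (fun i => dot8 (nth [::] rows i) s) 8.

Lemma mx_of_rows_vec8 rows s : mx_of_rows rows *m vec8 s = vec8 (rows_act rows s).
Proof.
by apply/colP => i; rewrite !mxE nth_mkseq // !big_ord_recr big_ord0 /= !mxE /= add0r.
Qed.

Definition commutant_rows : seq (seq (seq rat)) :=
  [:: [:: [:: 2; 1; 1; 0; 0; 0; 0; 0]; [:: 1; 0; 1; 0; 0; 0; 0; 0];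
          [:: 1; 1; 0; 0; 0; 0; 0; 0]; [:: 0; 0; 0; 0; 0; 0; 0; 0];
          [:: 0; 0; 0; 0; 0; 0; 0; 0]; [:: 0; 0; 0; 0; 0; 0; 0; 0];
          [:: 0; 0; 0; 0; 0; 0; 0; 0]; [:: 0; 0; 0; 0; 0; 0; 0; 0]];
      [:: [:: 0; 0; 0; 0; 2; 1; 1; 0]; [:: 0; 0; 0; 0; 1; 0; 1; 0];
          [:: 0; 0; 0; 0; 1; 1; 0; 0]; [:: 0; 0; 0; 0; 0; 0; 0; 0];
          [:: 2; 1; 1; 0; 0; 0; 0; 0]; [:: 1; 0; 1; 0; 0; 0; 0; 0];
          [:: 1; 1; 0; 0; 0; 0; 0; 0]; [:: 0; 0; 0; 0; 0; 0; 0; 0]];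
      [:: [:: 2; 1; 0; 0; 0; 0; 0; 0]; [:: 1; 0; 0; 0; 0; 0; 0; 0];
          [:: 0; 0; 2; 1; 0; 0; 0; 0]; [:: 0; 0; 1; 0; 0; 0; 0; 0];
          [:: 0; 0; 0; 0; 2; 1; 0; 0]; [:: 0; 0; 0; 0; 1; 0; 0; 0];
          [:: 0; 0; 0; 0; 0; 0; 2; 1]; [:: 0; 0; 0; 0; 0; 0; 1; 0]];
      [:: [:: 0; 0; 0; 0; 1; 0; 1; 0]; [:: 0; 0; 0; 0; 0; 0; 0; 0];
          [:: 0; 0; 0; 0; 1; 0; 1; 0]; [:: 0; 0; 0; 0; 0; 0; 0; 0];
          [:: 1; 0; 1; 0; 0; 0; 0; 0]; [:: 0; 0; 0; 0; 0; 0; 0; 0];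
          [:: 1; 0; 1; 0; 0; 0; 0; 0]; [:: 0; 0; 0; 0; 0; 0; 0; 0]]].

Definition commutant (g : nat) : mat8 := mx_of_rows (nth [::] commutant_rows g).

Definition commute_on_units (h : nat) (rows : seq (seq rat)) : bool :=
  all (fun j => gate_act h (rows_act rows (unit8 j)) == rows_act rows (gate_act h (unit8 j)))
    (iota 0 8).

Lemma commute_on_unitsP h rows :
  reflect (gate h *m mx_of_rows rows = mx_of_rows rows *m gate h) (commute_on_units h rows).
Proof.
have act_eq j : (gate h *m mx_of_rows rows *m vec8 (unit8 j) =
                 mx_of_rows rows *m gate h *m vec8 (unit8 j)) <->
                (gate_act h (rows_act rows (unit8 j)) = rows_act rows (gate_act h (unit8 j))).
  rewrite -!mulmxA mx_of_rows_vec8 !gate_vec8 mx_of_rows_vec8.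
  split=> [|-> //]; apply: vec8_inj; rewrite ?size_mkseq //.
  by case: h => [|[|[|h]]].
apply: (iffP allP) => [comm|comm j _]; last by apply/eqP/act_eq; rewrite comm.
by apply: eq_mx_unit8 => j; apply/act_eq/eqP; apply: comm; rewrite mem_iota ltn_ord.
Qed.

Lemma commutant_rows_ok :
  all (fun g => all (fun h => commute_on_units h (nth [::] commutant_rows g) == (h != g))
                    (iota 0 4))
      (iota 0 4).
Proof. by vm_compute. Qed.

Lemma gate_commutant h g : (g < 4)%N -> (h < 4)%N ->
  (gate h *m commutant g = commutant g *m gate h) <-> h <> g.
Proof.
move=> lt_g4 lt_h4.
have /eqP comm_hg := all_iota_lt (all_iota_lt commutant_rows_ok lt_g4) lt_h4.
by rewrite (rwP (commute_on_unitsP _ _)) comm_hg; split=> /eqP.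
Qed.

Lemma generated_commute (S : mat8 -> Prop) (Q : mat8) :
  (forall M, S M -> M *m Q = Q *m M) -> forall M, generated S M -> M *m Q = Q *m M.
Proof.
move=> SQ M; elim=> [|N /SQ //|A B _ AQ _ BQ|A _ AQ].
- by rewrite mul1mx mulmx1.
- by rewrite -mulmxA BQ !mulmxA AQ.
- have [uA | /invmx_out -> //] := boolP (A \in unitmx).
  rewrite -[LHS]mulmx1 -(mulmxV uA) !mulmxA -(mulmxA _ Q A) -AQ.
  by rewrite !mulmxA mulVmx // mul1mx.
Qed.

Lemma Sigma0_minimal (S : mat8 -> Prop) :
  (forall M, S M -> Sigma0 M) -> (exists M, Sigma0 M /\ ~ S M) -> ~ generates S.
Proof.
move=> SS0 [_ [/Sigma0_gate [g lt_g4 ->] notSg]] genS.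
have commS M : S M -> M *m commutant g = commutant g *m M.
  move=> SM; have [h lt_h4 Mh] := Sigma0_gate (SS0 M SM); rewrite Mh.
  by apply/gate_commutant => // hg; apply: notSg; rewrite -hg -Mh.
have := generated_commute commS ((genS (gate g)).2 (WE8_gate g)).
by move/gate_commutant => /(_ lt_g4 lt_g4).
Qed.

Theorem theorem2 :
  generates Sigma0 /\
  (forall S : 'M[rat]_8 -> Prop,
     (forall M, S M -> Sigma0 M) -> (exists M, Sigma0 M /\ ~ S M) ->
     ~ generates S).
Proof.
split; last exact: Sigma0_minimal.
by move=> M; split; [apply: generated_WE8 | apply: WE8_generated].
Qed.
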